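(* The disease-free equilibrium $E_0=\left(\frac{\Lambda}{\lambda},\frac{r\Lambda}{\mu\lambda},0,0\right)$ of the model is unstable if $\mathcal{R}_0>1$ and locally asymptotically stable if $\mathcal{R}_0<1$.
   Context: The model is $\dot S=\Lambda-F_1(S,I_1)-F_2(S,I_2)-\lambda S$, $\dot V_1=rS-(\mu+kI_2)V_1$, $\dot I_1=F_1(S,I_1)-\alpha_1I_1$, $\dot I_2=F_2(S,I_2)+kI_2V_1-\alpha_2I_2$ on $\mathbb{R}^4_+$. The constants $\Lambda,\mu,r,k,\gamma_1,\gamma_2>0$ and $v_1,v_2\ge0$; $\lambda=r+\mu$ and $\alpha_i=\gamma_i+v_i+\mu$. For $i=1,2$ the incidence functions satisfy: - (H1) $F_i(S,I_i)=I_if_i(S,I_i)$ with $F_i,f_i\in C^2(\mathbb{R}^2_+,\mathbb{R}_+)$ and $F_i(0,I_i)=F_i(S,0)=0$; - (H2) $\partial f_i/\partial S>0$ and $\partial f_i/\partial I_i\le0$; - (H3) $\lim_{I_i\to0^+}F_i(S,I_i)/I_i$ exists and is positive for $S>0$. Let $S^0=\Lambda/\lambda$ and $\sigma_i=\frac{\partial F_i}{\partial I_i}(S^0,0)$. Set $\mathcal{R}_1=\sigma_1/\alpha_1$, $\mathcal{R}_2=\sigma_2/\alpha_2+\frac{kr\Lambda}{\alpha_2\mu\lambda}$ and $\mathcal{R}_0=\max\{\mathcal{R}_1,\mathcal{R}_2\}$. *)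

From Stdlib Require Import Reals.
From Coquelicot Require Import Coquelicot.
Open Scope R_scope.

Definition dS (g : R -> R -> R) (s i : R) : R := Derive (fun s' => g s' i) s.
Definition dI (g : R -> R -> R) (s i : R) : R := Derive (fun i' => g s i') i.

Definition C1_2d (g : R -> R -> R) : Prop :=
  forall s i : R,
    ex_derive (fun s' => g s' i) s /\ ex_derive (fun i' => g s i') i /\
    continuous (fun p : R * R => g (fst p) (snd p)) (s, i) /\
    continuous (fun p : R * R => dS g (fst p) (snd p)) (s, i) /\
    continuous (fun p : R * R => dI g (fst p) (snd p)) (s, i).

Definition C2_2d (g : R -> R -> R) : Prop :=
  C1_2d g /\ C1_2d (dS g) /\ C1_2d (dI g).

(** Hypotheses (H1)-(H3) on an incidence function F = I f, stated on the
    closed quadrant R^2_+ (F, f are given as C^2 functions on R^2 whose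
    restrictions to R^2_+ are the incidence functions). *)
Definition incidence_hyp (F f : R -> R -> R) : Prop :=
  C2_2d F /\ C2_2d f /\
  (forall s i, 0 <= s -> 0 <= i -> F s i = i * f s i) /\
  (forall s i, 0 <= s -> 0 <= i -> 0 <= F s i /\ 0 <= f s i) /\
  (forall i, 0 <= i -> F 0 i = 0) /\
  (forall s, 0 <= s -> F s 0 = 0) /\
  (forall s i, 0 <= s -> 0 <= i -> dS f s i > 0 /\ dI f s i <= 0) /\
  (forall s, 0 < s ->
     exists L, 0 < L /\ filterlim (fun i => F s i / i) (at_right 0) (locally L)).

Definition lam (r mu : R) : R := r + mu.
Definition alpha (gam v mu : R) : R := gam + v + mu.
Definition S0 (Lam r mu : R) : R := Lam / lam r mu.

Definition E0_S (Lam r mu : R) : R := Lam / lam r mu.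
Definition E0_V (Lam r mu : R) : R := r * Lam / (mu * lam r mu).

Definition sigma (F : R -> R -> R) (Lam r mu : R) : R := dI F (S0 Lam r mu) 0.
Definition calR1 (F1 : R -> R -> R) (Lam mu r gam1 v1 : R) : R :=
  sigma F1 Lam r mu / alpha gam1 v1 mu.
Definition calR2 (F2 : R -> R -> R) (Lam mu r k gam2 v2 : R) : R :=
  sigma F2 Lam r mu / alpha gam2 v2 mu
  + k * r * Lam / (alpha gam2 v2 mu * mu * lam r mu).
Definition calR0 (F1 F2 : R -> R -> R) (Lam mu r k gam1 gam2 v1 v2 : R) : R :=
  Rmax (calR1 F1 Lam mu r gam1 v1) (calR2 F2 Lam mu r k gam2 v2).

Definition is_solution (F1 F2 : R -> R -> R) (Lam mu r k gam1 gam2 v1 v2 : R)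
    (S V I1 I2 : R -> R) : Prop :=
  (forall t, 0 <= t -> 0 <= S t /\ 0 <= V t /\ 0 <= I1 t /\ 0 <= I2 t) /\
  filterlim S (at_right 0) (locally (S 0)) /\
  filterlim V (at_right 0) (locally (V 0)) /\
  filterlim I1 (at_right 0) (locally (I1 0)) /\
  filterlim I2 (at_right 0) (locally (I2 0)) /\
  (forall t, 0 < t ->
     is_derive S t (Lam - F1 (S t) (I1 t) - F2 (S t) (I2 t) - lam r mu * S t) /\
     is_derive V t (r * S t - (mu + k * I2 t) * V t) /\
     is_derive I1 t (F1 (S t) (I1 t) - alpha gam1 v1 mu * I1 t) /\
     is_derive I2 t (F2 (S t) (I2 t) + k * I2 t * V t - alpha gam2 v2 mu * I2 t)).

Definition dist4 (a1 a2 a3 a4 b1 b2 b3 b4 : R) : R :=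
  sqrt ((a1 - b1) ^ 2 + (a2 - b2) ^ 2 + (a3 - b3) ^ 2 + (a4 - b4) ^ 2).

Definition E0_stable (F1 F2 : R -> R -> R) (Lam mu r k gam1 gam2 v1 v2 : R) : Prop :=
  forall eps, 0 < eps -> exists delta, 0 < delta /\
    forall S V I1 I2,
      is_solution F1 F2 Lam mu r k gam1 gam2 v1 v2 S V I1 I2 ->
      dist4 (S 0) (V 0) (I1 0) (I2 0) (E0_S Lam r mu) (E0_V Lam r mu) 0 0 < delta ->
      forall t, 0 <= t ->
        dist4 (S t) (V t) (I1 t) (I2 t) (E0_S Lam r mu) (E0_V Lam r mu) 0 0 < eps.

Definition E0_attractive (F1 F2 : R -> R -> R) (Lam mu r k gam1 gam2 v1 v2 : R) : Prop :=
  exists eta, 0 < eta /\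
    forall S V I1 I2,
      is_solution F1 F2 Lam mu r k gam1 gam2 v1 v2 S V I1 I2 ->
      dist4 (S 0) (V 0) (I1 0) (I2 0) (E0_S Lam r mu) (E0_V Lam r mu) 0 0 < eta ->
      filterlim (fun t => dist4 (S t) (V t) (I1 t) (I2 t)
                            (E0_S Lam r mu) (E0_V Lam r mu) 0 0)
                (Rbar_locally p_infty) (locally 0).

Definition E0_LAS (F1 F2 : R -> R -> R) (Lam mu r k gam1 gam2 v1 v2 : R) : Prop :=
  E0_stable F1 F2 Lam mu r k gam1 gam2 v1 v2 /\
  E0_attractive F1 F2 Lam mu r k gam1 gam2 v1 v2.

Definition E0_unstable (F1 F2 : R -> R -> R) (Lam mu r k gam1 gam2 v1 v2 : R) : Prop :=
  ~ E0_stable F1 F2 Lam mu r k gam1 gam2 v1 v2.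

(* If f1(S0,0) > alpha1 (resp. f2(S0,0) + k V0 > alpha2), then near E0 the class I1
   (resp. I2) satisfies I' >= c I for some c > 0, so a solution starting at (S0, V0, rho, 0)
   (resp. (S0, V0, 0, rho)) grows at least like rho e^{ct} for as long as it stays near E0, which
   rules out Lyapunov stability.  Such solutions exist: Picard iteration solves the system with its
   field clamped to a box, and the clamp is never active because R^4_+ and the region
   S + V + I1 + I2 <= Lam/mu + 1 are invariant.  If both inequalities are reversed, every solution starting delta-close to E0 keeps
   S <= S0 + delta and V <= V0 + 3 delta, hence by the monotonicity (H2) of f_i the classes I1, I2
   decay like e^{-ct}; comparison for the linear equations of S and V forced by these terms gives
   |x(t) - E0| <= M |x(0) - E0| e^{-ct}.
   Since sigma_i = f_i(S0, 0) by (H1), the two inequalities read R1 > 1 and R2 > 1. *)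

From Pilot Require Import Defs.
From Stdlib Require Import Reals Lra Psatz Lia Classical ClassicalEpsilon.
From Coquelicot Require Import Coquelicot.
Open Scope R_scope.

(** * Differential inequalities on the half-line *)

Lemma continuous_R_eps (f : R -> R) x :
  continuous f x <->
  forall e, 0 < e -> exists d, 0 < d /\ forall y, Rabs (y - x) < d -> Rabs (f y - f x) < e.
Proof.
  split.
  - intros H e He.
    destruct (proj1 (filterlim_locally f (f x)) H (mkposreal e He)) as [d Hd].
    exists d. split; [apply cond_pos | intros y Hy; exact (Hd y Hy)].
  - intros H. apply filterlim_locally. intros e.
    destruct (H e (cond_pos e)) as [d [Hd Hy]].
    exists (mkposreal d Hd). intros y Hb. exact (Hy y Hb).
Qed.

Lemma continuous_at_right (f : R -> R) x :
  continuous f x -> filterlim f (at_right x) (locally (f x)).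
Proof. intros H. exact (filterlim_filter_le_1 f (filter_le_within _) H). Qed.

Lemma continuous_Rplus (f g : R -> R) x :
  continuous f x -> continuous g x -> continuous (fun t => f t + g t) x.
Proof. apply (continuous_plus (V := R_NormedModule)). Qed.

Lemma is_derive_Rplus (f g : R -> R) x df dg :
  is_derive f x df -> is_derive g x dg -> is_derive (fun t => f t + g t) x (df + dg).
Proof. intros Hf Hg. exact (is_derive_plus f g x df dg Hf Hg). Qed.

Lemma is_derive_sub_const (x : R -> R) m t l : is_derive x t l -> is_derive (fun t => x t - m) t l.
Proof.
  intros Hx. replace l with (l - 0) by ring.
  apply (is_derive_minus x (fun _ => m)); [exact Hx | apply (is_derive_const (V := R_NormedModule))].
Qed.

Lemma filterlim_Rplus {F : (R -> Prop) -> Prop} {FF : Filter F} (f g : R -> R) a b :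
  filterlim f F (locally a) -> filterlim g F (locally b) ->
  filterlim (fun t => f t + g t) F (locally (a + b)).
Proof.
  intros Hf Hg. eapply filterlim_comp_2; [exact Hf | exact Hg |].
  exact (filterlim_plus (K := R_AbsRing) (V := R_NormedModule) a b).
Qed.

Lemma filterlim_Rmult {F : (R -> Prop) -> Prop} {FF : Filter F} (f g : R -> R) a b :
  filterlim f F (locally a) -> filterlim g F (locally b) ->
  filterlim (fun t => f t * g t) F (locally (a * b)).
Proof.
  intros Hf Hg. eapply filterlim_comp_2; [exact Hf | exact Hg |].
  exact (filterlim_mult (K := R_AbsRing) a b).
Qed.

Lemma filterlim_at_right_sub_const (x : R -> R) m :
  filterlim x (at_right 0) (locally (x 0)) -> filterlim (fun t => x t - m) (at_right 0) (locally (x 0 - m)).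
Proof. intros Hx. apply filterlim_Rplus; [exact Hx | apply filterlim_const]. Qed.

Lemma le_at_right_limit (w : R -> R) t :
  0 < t -> filterlim w (at_right 0) (locally (w 0)) ->
  (forall s, 0 < s <= t -> w s <= w t) -> w 0 <= w t.
Proof.
  intros Ht Hw Hle.
  apply (filterlim_le (F := at_right 0) w (fun _ => w t) (w 0) (w t)); trivial.
  - exists (mkposreal t Ht). intros s Hs Hs0. apply Hle. split; trivial.
    change (Rabs (s - 0) < t) in Hs. apply Rabs_lt_between in Hs. lra.
  - apply filterlim_const.
Qed.

Lemma le_of_derive_nonneg (f df : R -> R) a b : a <= b ->
  (forall x, a < x < b -> is_derive f x (df x)) ->
  (forall x, a <= x <= b -> continuous f x) ->
  (forall x, a < x < b -> 0 <= df x) -> f a <= f b.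
Proof.
  intros Hab Hd Hc Hp.
  destruct (Req_dec a b) as [<- | Hne]; [lra |].
  assert (Hder : forall x, a < x < b -> derivable_pt f x).
  { intros x Hx. exists (df x). apply is_derive_Reals, Hd, Hx. }
  destruct (MVT f id a b Hder (fun x _ => derivable_pt_id x)) as [c [Hcab Heq]];
    [lra | intros x Hx; apply continuity_pt_filterlim, Hc, Hx
    | intros x _; apply derivable_continuous_pt, derivable_pt_id |].
  rewrite derive_pt_id in Heq. unfold id in Heq.
  rewrite (derive_pt_eq_0 _ _ _ _ (proj1 (is_derive_Reals _ _ _) (Hd c Hcab))) in Heq.
  specialize (Hp c Hcab). nra.
Qed.

Lemma le_of_derive_nonneg_closed (f df : R -> R) a b : a <= b ->
  (forall x, a <= x <= b -> is_derive f x (df x)) ->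
  (forall x, a <= x <= b -> 0 <= df x) -> f a <= f b.
Proof.
  intros Hab Hd Hp. apply (le_of_derive_nonneg f df a b Hab).
  - intros x Hx. apply Hd. lra.
  - intros x Hx. apply (ex_derive_continuous (V := R_NormedModule)). exists (df x). apply Hd, Hx.
  - intros x Hx. apply Hp. lra.
Qed.

Lemma nonneg_invariant (u du : R -> R) eps : 0 < eps ->
  (forall t, continuous u t) -> (forall t, 0 < t -> is_derive u t (du t)) -> 0 <= u 0 ->
  (forall t, 0 < t -> - eps < u t < 0 -> 0 <= du t) -> forall t, 0 <= t -> 0 <= u t.
Proof.
  intros He Hc Hd H0 Hb t1 Ht1. apply Rnot_lt_le. intros Hneg.
  (* Look at the last time [s0 <= t1] at which [u] is nonnegative. *)
  assert (Ht1p : 0 < t1) by (destruct (Req_dec t1 0) as [-> |]; lra).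
  set (E := fun s => 0 <= s <= t1 /\ 0 <= u s).
  assert (HbE : bound E) by (exists t1; intros s [Hs _]; lra).
  destruct (completeness E HbE (ex_intro _ 0 (conj (conj (Rle_refl 0) (Rlt_le _ _ Ht1p)) H0)))
    as [s0 [Hub Hlub]].
  assert (Hs0 : 0 <= s0 <= t1).
  { split; [apply Hub; split; [lra | exact H0] | apply Hlub; intros s [Hs _]; lra]. }
  assert (Hneg_after : forall s, s0 < s <= t1 -> u s < 0).
  { intros s Hs. apply Rnot_le_lt. intros Hpos.
    assert (s <= s0) by (apply Hub; split; [lra | exact Hpos]). lra. }
  assert (Hu0 : 0 <= u s0).
  { apply Rnot_lt_le. intros Hlt.
    destruct (proj1 (continuous_R_eps u s0) (Hc s0) (- u s0) ltac:(lra)) as [d [Hdp Hdd]].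
    assert (s0 <= s0 - d / 2); [| lra].
    apply Hlub. intros s [Hs Hus]. apply Rnot_lt_le. intros Hlt2.
    assert (s <= s0) by (apply Hub; split; trivial).
    assert (Hclose : Rabs (s - s0) < d) by (rewrite Rabs_left1; lra).
    specialize (Hdd s Hclose). apply Rabs_lt_between in Hdd. lra. }
  assert (Hlt1 : s0 < t1) by (destruct (Req_dec s0 t1) as [-> |]; lra).
  destruct (proj1 (continuous_R_eps u s0) (Hc s0) eps He) as [d [Hdp Hdd]].
  set (t2 := Rmin t1 (s0 + d / 2)).
  assert (Ht2 : s0 < t2 <= t1 /\ t2 <= s0 + d / 2).
  { unfold t2. split; [split; [apply Rmin_glb_lt; lra | apply Rmin_l] | apply Rmin_r]. }
  assert (u s0 <= u t2); [| specialize (Hneg_after t2); lra].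
  apply (le_of_derive_nonneg u du s0 t2); [lra | intros x Hx; apply Hd; lra | intros x _; apply Hc |].
  intros x Hx. apply Hb; [lra | split; [| apply Hneg_after; lra]].
  assert (Hclose : Rabs (x - s0) < d) by (rewrite Rabs_pos_eq; lra).
  specialize (Hdd x Hclose). apply Rabs_lt_between in Hdd. lra.
Qed.

Lemma exp_decay_antitone a b t : a <= b -> 0 <= t -> exp (- b * t) <= exp (- a * t).
Proof.
  intros Hab Ht. destruct (Req_dec (- b * t) (- a * t)) as [E | E]; [rewrite E; lra |].
  left. apply exp_increasing. nra.
Qed.

Lemma exp_decay_le_1 a t : 0 <= a -> 0 <= t -> exp (- a * t) <= 1.
Proof.
  intros Ha Ht. pose proof (exp_decay_antitone 0 a t Ha Ht) as H.
  replace (- 0 * t) with 0 in H by ring. rewrite exp_0 in H. exact H.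
Qed.

Lemma exp_decay_eventually_lt C c eps : 0 < c -> 0 < eps ->
  exists T, forall t, T < t -> C * exp (- c * t) < eps.
Proof.
  intros Hc He. exists (Rabs C / (c * eps)). intros t Ht.
  assert (HT : 0 <= Rabs C / (c * eps)) by (apply Rdiv_le_0_compat; [apply Rabs_pos | nra]).
  assert (Hct : Rabs C < c * t * eps).
  { apply (Rmult_lt_compat_r (c * eps)) in Ht; [| nra].
    unfold Rdiv in Ht. rewrite Rmult_assoc, Rinv_l, Rmult_1_r in Ht by nra. lra. }
  assert (Hinv : exp (- c * t) * exp (c * t) = 1).
  { rewrite <- exp_plus. replace (- c * t + c * t) with 0 by ring. apply exp_0. }
  pose proof (exp_ineq1_le (c * t)). pose proof (exp_pos (- c * t)) as He_pos.
  assert (Hsmall : c * t * exp (- c * t) < 1) by nra.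
  apply Rle_lt_trans with (Rabs C * exp (- c * t)); [apply Rmult_le_compat_r; [lra | apply Rle_abs] |].
  apply Rlt_le_trans with (c * t * eps * exp (- c * t)); [apply Rmult_lt_compat_r; lra |].
  replace (c * t * eps * exp (- c * t)) with (eps * (c * t * exp (- c * t))) by ring. nra.
Qed.

Lemma Rmult_abs_le_between a D e E : Rabs a <= D -> 0 <= e <= E -> - (D * E) <= a * e <= D * E.
Proof.
  intros Ha He. apply Rabs_le_between. rewrite Rabs_mult, (Rabs_pos_eq e) by lra.
  pose proof (Rabs_pos a). apply Rmult_le_compat; lra.
Qed.

(* [(x t + K e^{-ct}) e^{at}] is nondecreasing. *)
Lemma exp_comparison_lower (x dx : R -> R) (a c K : R) :
  filterlim x (at_right 0) (locally (x 0)) ->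
  (forall t, 0 < t -> is_derive x t (dx t)) ->
  (forall t, 0 < t -> 0 <= dx t + a * x t + K * (a - c) * exp (- c * t)) ->
  forall t, 0 <= t -> (x 0 + K) * exp (- a * t) - K * exp (- c * t) <= x t.
Proof.
  intros Hx0 Hd Hrate.
  set (w := fun t => (x t + K * exp (- c * t)) * exp (a * t)).
  assert (Hdw : forall t, 0 < t ->
    is_derive w t ((dx t + a * x t + K * (a - c) * exp (- c * t)) * exp (a * t))).
  { intros t Ht. unfold w. auto_derive; [exists (dx t); exact (Hd t Ht) |].
    replace (Derive (fun u => x u) t) with (dx t) by (symmetry; apply is_derive_unique, Hd, Ht).
    ring. }
  assert (Hcont : forall u, continuous (fun t => K * exp (- c * t)) u /\ continuous (fun t => exp (a * t)) u).
  { intros u. split; apply (ex_derive_continuous (V := R_NormedModule)); auto_derive; exact I. }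
  assert (Hw0 : filterlim w (at_right 0) (locally (w 0))).
  { apply filterlim_Rmult; [apply filterlim_Rplus; [exact Hx0 |] |].
    - apply (continuous_at_right (fun t => K * exp (- c * t))), Hcont.
    - apply (continuous_at_right (fun t => exp (a * t))), Hcont. }
  assert (Hmono : forall t, 0 <= t -> w 0 <= w t).
  { intros t Ht. destruct (Req_dec t 0) as [-> | Ht0]; [lra |].
    apply (le_at_right_limit w t); [lra | exact Hw0 |].
    intros s Hs. apply (le_of_derive_nonneg w
      (fun y => (dx y + a * x y + K * (a - c) * exp (- c * y)) * exp (a * y)) s t);
      [lra | intros y Hy; apply Hdw; lra | |].
    - intros y Hy. apply (ex_derive_continuous (V := R_NormedModule)). eexists. apply Hdw. lra.
    - intros y Hy. apply Rmult_le_pos; [apply Hrate; lra | apply Rlt_le, exp_pos]. }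
  intros t Ht. specialize (Hmono t Ht). unfold w in Hmono.
  replace (- c * 0) with 0 in Hmono by ring. replace (a * 0) with 0 in Hmono by ring.
  rewrite exp_0, !Rmult_1_r in Hmono.
  assert (Hinv : exp (- a * t) * exp (a * t) = 1).
  { rewrite <- exp_plus. replace (- a * t + a * t) with 0 by ring. apply exp_0. }
  pose proof (exp_pos (- a * t)) as Hpos.
  assert (Hscaled := Rmult_le_compat_r (exp (- a * t)) _ _ (Rlt_le _ _ Hpos) Hmono).
  replace ((x t + K * exp (- c * t)) * exp (a * t) * exp (- a * t)) with (x t + K * exp (- c * t))
    in Hscaled by (rewrite Rmult_assoc, (Rmult_comm (exp (a * t))), Hinv; ring).
  lra.
Qed.

Lemma exp_comparison_upper (x dx : R -> R) (a c K : R) :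
  filterlim x (at_right 0) (locally (x 0)) ->
  (forall t, 0 < t -> is_derive x t (dx t)) ->
  (forall t, 0 < t -> dx t + a * x t + K * (a - c) * exp (- c * t) <= 0) ->
  forall t, 0 <= t -> x t <= (x 0 + K) * exp (- a * t) - K * exp (- c * t).
Proof.
  intros Hx0 Hd Hrate t Ht.
  assert (Hopp : filterlim (fun t => - x t) (at_right 0) (locally (- x 0))).
  { eapply filterlim_comp; [exact Hx0 | apply (filterlim_opp (V := R_NormedModule))]. }
  assert (Hlow : (- x 0 + - K) * exp (- a * t) - - K * exp (- c * t) <= - x t).
  { apply (exp_comparison_lower (fun t => - x t) (fun t => - dx t) a c (- K) Hopp);
      [intros u Hu; apply (is_derive_opp x), Hd, Hu | | exact Ht].
    intros u Hu. specialize (Hrate u Hu). lra. }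
  lra.
Qed.

Lemma exp_comparison_lower_shifted (x dx : R -> R) (m a c K : R) :
  filterlim x (at_right 0) (locally (x 0)) ->
  (forall t, 0 < t -> is_derive x t (dx t)) ->
  (forall t, 0 < t -> 0 <= dx t + a * (x t - m) + K * (a - c) * exp (- c * t)) ->
  forall t, 0 <= t -> (x 0 - m + K) * exp (- a * t) - K * exp (- c * t) <= x t - m.
Proof.
  intros Hx0 Hd. apply (exp_comparison_lower (fun t => x t - m) dx a c K).
  - apply filterlim_at_right_sub_const, Hx0.
  - intros t Ht. apply is_derive_sub_const, Hd, Ht.
Qed.

Lemma exp_comparison_upper_shifted (x dx : R -> R) (m a c K : R) :
  filterlim x (at_right 0) (locally (x 0)) ->
  (forall t, 0 < t -> is_derive x t (dx t)) ->
  (forall t, 0 < t -> dx t + a * (x t - m) + K * (a - c) * exp (- c * t) <= 0) ->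
  forall t, 0 <= t -> x t - m <= (x 0 - m + K) * exp (- a * t) - K * exp (- c * t).
Proof.
  intros Hx0 Hd. apply (exp_comparison_upper (fun t => x t - m) dx a c K).
  - apply filterlim_at_right_sub_const, Hx0.
  - intros t Ht. apply is_derive_sub_const, Hd, Ht.
Qed.

Lemma exp_growth_not_bounded (x dx : R -> R) (c d : R) : 0 < c -> 0 < x 0 ->
  filterlim x (at_right 0) (locally (x 0)) ->
  (forall t, 0 < t -> is_derive x t (dx t)) ->
  (forall t, 0 < t -> c * x t <= dx t) ->
  ~ (forall t, 0 <= t -> x t < d).
Proof.
  intros Hc Hx0 Hrc Hd Hrate Hbound.
  set (t := Rmax 0 (d / (x 0 * c))).
  assert (Ht : 0 <= t) by apply Rmax_l.
  assert (Hgrowth : x 0 * exp (c * t) <= x t).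
  { assert (H := exp_comparison_lower x dx (- c) 0 0 Hrc Hd
                   ltac:(intros u Hu; specialize (Hrate u Hu); lra) t Ht).
    replace (- - c * t) with (c * t) in H by ring. lra. }
  assert (Hlin : d <= x 0 * c * t).
  { apply (Rmult_le_reg_r (/ (x 0 * c))); [apply Rinv_0_lt_compat; nra |].
    replace (x 0 * c * t * / (x 0 * c)) with t by (field; lra). apply Rmax_r. }
  pose proof (exp_ineq1_le (c * t)). specialize (Hbound t Ht). nra.
Qed.

(** * Global existence by Picard iteration *)

Lemma abs_le_of_derive_exp_bound (h dh : R -> R) C K t : 0 < K -> 0 <= t -> h 0 = 0 ->
  (forall s, 0 <= s <= t -> is_derive h s (dh s)) ->
  (forall s, 0 <= s <= t -> Rabs (dh s) <= C * exp (K * s)) ->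
  Rabs (h t) <= C * exp (K * t) / K.
Proof.
  intros HK Ht H0 Hd Hb.
  assert (Hexp : forall s, is_derive (fun s => C / K * exp (K * s)) s (C * exp (K * s))).
  { intros s. auto_derive; [exact I | field; lra]. }
  assert (Hup : C / K * exp (K * 0) - h 0 <= C / K * exp (K * t) - h t).
  { apply (le_of_derive_nonneg_closed (fun s => C / K * exp (K * s) - h s)
      (fun s => C * exp (K * s) - dh s)); trivial.
    - intros s Hs. apply (is_derive_minus (fun s => C / K * exp (K * s)) h); auto.
    - intros s Hs. specialize (Hb s Hs). apply Rabs_le_between in Hb. lra. }
  assert (Hlow : C / K * exp (K * 0) + h 0 <= C / K * exp (K * t) + h t).
  { apply (le_of_derive_nonneg_closed (fun s => C / K * exp (K * s) + h s)
      (fun s => C * exp (K * s) + dh s)); trivial.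
    - intros s Hs. apply (is_derive_plus (fun s => C / K * exp (K * s)) h); auto.
    - intros s Hs. specialize (Hb s Hs). apply Rabs_le_between in Hb. lra. }
  assert (HC : 0 <= C).
  { specialize (Hb 0 (conj (Rle_refl 0) Ht)). rewrite Rmult_0_r, exp_0 in Hb.
    pose proof (Rabs_pos (dh 0)). lra. }
  assert (0 <= C / K) by (apply Rdiv_le_0_compat; lra).
  rewrite H0, Rmult_0_r, exp_0 in Hup, Hlow.
  apply Rabs_le_between. unfold Rdiv in *. lra.
Qed.

Fixpoint norm1 (d : nat) (x : nat -> R) : R :=
  match d with
  | O => 0
  | S d => norm1 d x + Rabs (x d)
  end.

Lemma norm1_nonneg d x : 0 <= norm1 d x.
Proof. induction d as [| d IH]; simpl; [lra | pose proof (Rabs_pos (x d)); lra]. Qed.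

Lemma Rabs_le_norm1 d x i : (i < d)%nat -> Rabs (x i) <= norm1 d x.
Proof.
  induction d as [| d IH]; intros Hi; [lia | simpl].
  pose proof (norm1_nonneg d x). pose proof (Rabs_pos (x d)).
  destruct (Nat.eq_dec i d) as [-> | Hne]; [lra |].
  specialize (IH ltac:(lia)). lra.
Qed.

Lemma norm1_le_mono d x y :
  (forall i, (i < d)%nat -> Rabs (x i) <= Rabs (y i)) -> norm1 d x <= norm1 d y.
Proof.
  induction d as [| d IH]; intros H; simpl; [lra |].
  assert (norm1 d x <= norm1 d y) by (apply IH; intros i Hi; apply H; lia).
  specialize (H d ltac:(lia)). lra.
Qed.

Lemma norm1_le_const d x M :
  (forall i, (i < d)%nat -> Rabs (x i) <= M) -> norm1 d x <= INR d * M.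
Proof.
  induction d as [| d IH]; intros H; cbn [norm1]; [simpl; lra |].
  rewrite S_INR. assert (norm1 d x <= INR d * M) by (apply IH; intros i Hi; apply H; lia).
  specialize (H d ltac:(lia)). lra.
Qed.

Lemma continuous_norm1 d (y : R -> nat -> R) t :
  (forall i, continuous (fun s => y s i) t) -> continuous (fun s => norm1 d (y s)) t.
Proof.
  intros Hy. induction d as [| d IH]; simpl.
  - apply continuous_const.
  - apply (continuous_plus (fun s => norm1 d (y s)) (fun s => Rabs (y s d))); trivial.
    apply continuous_Rabs_comp, Hy.
Qed.

Definition lipschitz_norm1 (d : nat) (G : (nat -> R) -> nat -> R) (L : R) : Prop :=
  forall x y j, Rabs (G x j - G y j) <= L * norm1 d (fun i => x i - y i).

Lemma continuous_lipschitz_comp d G L (y : R -> nat -> R) t j :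
  lipschitz_norm1 d G L -> (forall i, continuous (fun s => y s i) t) ->
  continuous (fun s => G (y s) j) t.
Proof.
  intros HL Hy. apply continuous_R_eps. intros e He.
  assert (Hn : continuous (fun s => norm1 d (fun i => y s i - y t i)) t).
  { apply (continuous_norm1 d (fun s i => y s i - y t i)). intros i.
    apply (continuous_minus (fun s => y s i) (fun _ => y t i)); [apply Hy | apply continuous_const]. }
  set (L' := Rabs L + 1).
  assert (HL' : 0 < L') by (unfold L'; pose proof (Rabs_pos L); lra).
  destruct (proj1 (continuous_R_eps _ t) Hn (e / L') (Rdiv_lt_0_compat _ _ He HL')) as [delta [Hdelta Hclose]].
  exists delta. split; [exact Hdelta |]. intros s Hs.
  specialize (Hclose s Hs). specialize (HL (y s) (y t) j).
  assert (Hzero : norm1 d (fun i => y t i - y t i) = 0).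
  { clear. induction d as [| d IH]; simpl; [reflexivity | rewrite IH, Rminus_diag, Rabs_R0; ring]. }
  rewrite Hzero, Rminus_0_r in Hclose.
  pose proof (norm1_nonneg d (fun i => y s i - y t i)) as Hnn.
  rewrite Rabs_pos_eq in Hclose by exact Hnn.
  assert (Hlt : norm1 d (fun i => y s i - y t i) * L' < e).
  { apply (Rmult_lt_compat_r L') in Hclose; [| exact HL'].
    unfold Rdiv in Hclose. rewrite Rmult_assoc, Rinv_l in Hclose; lra. }
  assert (L <= L') by (unfold L'; pose proof (Rle_abs L); lra).
  nra.
Qed.

Lemma is_derive_RInt_0 (g : R -> R) t : (forall s, continuous g s) ->
  is_derive (fun u => RInt g 0 u) t (g t).
Proof.
  intros Hc. apply (is_derive_RInt g (fun u => RInt g 0 u) 0 t); [| apply Hc].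
  apply filter_forall. intros b. apply (RInt_correct (V := R_CompleteNormedModule)).
  apply (ex_RInt_continuous (V := R_CompleteNormedModule)). intros; apply Hc.
Qed.

Lemma lim_abs_sub_le (u v : nat -> R) (lu lv c : R) :
  is_lim_seq u lu -> is_lim_seq v lv -> (forall n, Rabs (u n - v n) <= c) -> Rabs (lu - lv) <= c.
Proof.
  intros Hu Hv Hb.
  assert (Hlim : is_lim_seq (fun n => Rabs (u n - v n)) (Rabs (lu - lv))).
  { apply (is_lim_seq_abs _ (lu - lv)), is_lim_seq_minus'; assumption. }
  exact (is_lim_seq_le _ _ (Rabs (lu - lv)) c Hb Hlim (is_lim_seq_const c)).
Qed.

Lemma geometric_eventually_small C eps : 0 < eps ->
  exists N, forall n, (N <= n)%nat -> C * (1 / 2) ^ n < eps.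
Proof.
  intros He.
  assert (Hgeom : is_lim_seq (fun n => C * (1 / 2) ^ n) 0).
  { replace (Finite 0) with (Rbar_mult C 0) by (simpl; f_equal; ring).
    apply is_lim_seq_scal_l, is_lim_seq_geom. rewrite Rabs_pos_eq; lra. }
  destruct (proj2 (is_lim_seq_spec _ _) Hgeom (mkposreal eps He)) as [N HN].
  exists N. intros n Hn. specialize (HN n Hn). simpl in HN.
  rewrite Rminus_0_r in HN. pose proof (Rle_abs (C * (1 / 2) ^ n)). lra.
Qed.

Lemma le_0_of_geometric_bound a C : (forall n, a <= C * (1 / 2) ^ n) -> a <= 0.
Proof.
  intros H.
  assert (Hgeom : is_lim_seq (fun n => C * (1 / 2) ^ n) 0).
  { replace (Finite 0) with (Rbar_mult C 0) by (simpl; f_equal; ring).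
    apply is_lim_seq_scal_l, is_lim_seq_geom. rewrite Rabs_pos_eq; lra. }
  exact (is_lim_seq_le _ _ a 0 H (is_lim_seq_const a) Hgeom).
Qed.

Section Picard.

Variables (d : nat) (G : (nat -> R) -> nat -> R) (L B : R) (x0 : nat -> R).
Hypotheses (HL : lipschitz_norm1 d G L) (HL0 : 0 <= L) (HB : forall x j, Rabs (G x j) <= B).

Fixpoint picard_iter (n : nat) (t : R) : nat -> R :=
  match n with
  | O => x0
  | S n => fun j => x0 j + RInt (fun s => G (picard_iter n s) j) 0 t
  end.

Lemma picard_iter_at_0 n j : picard_iter n 0 j = x0 j.
Proof. destruct n; simpl; [reflexivity | rewrite RInt_point; apply Rplus_0_r]. Qed.

Lemma is_derive_picard_iter n t j :
  (forall s i, continuous (fun s => picard_iter n s i) s) ->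
  is_derive (fun t => picard_iter (S n) t j) t (G (picard_iter n t) j).
Proof.
  intros Hc. simpl.
  apply (is_derive_ext (fun u => x0 j + RInt (fun s => G (picard_iter n s) j) 0 u)); [reflexivity |].
  replace (G (picard_iter n t) j) with (0 + G (picard_iter n t) j) by ring.
  apply (is_derive_plus (fun _ => x0 j)); [apply (is_derive_const (V := R_NormedModule)) |].
  apply is_derive_RInt_0. intros s. apply (continuous_lipschitz_comp d G L); auto.
Qed.

Lemma continuous_picard_iter n t j : continuous (fun t => picard_iter n t j) t.
Proof.
  revert t j. induction n as [| n IH]; intros t j; [apply continuous_const |].
  apply (ex_derive_continuous (V := R_NormedModule)).
  eexists. apply is_derive_picard_iter. intros; apply IH.
Qed.

Lemma field_bound_nonneg : 0 <= B.
Proof. pose proof (HB x0 O). pose proof (Rabs_pos (G x0 O)). lra. Qed.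

(* With this rate every Picard step halves the bound [A (1/2)^n e^{K t}] on successive differences. *)
Let K := 2 * INR d * L + 1.
Let A := B / K.

Lemma picard_rate_pos : 0 < K.
Proof. unfold K. pose proof (pos_INR d). nra. Qed.

Lemma picard_scale_nonneg : 0 <= A.
Proof. apply Rdiv_le_0_compat; [apply field_bound_nonneg | apply picard_rate_pos]. Qed.

Lemma picard_contraction C t : 0 <= C -> L * (INR d * C) * exp (K * t) / K <= C * exp (K * t) / 2.
Proof.
  intros HC. pose proof picard_rate_pos as HK. pose proof (exp_pos (K * t)).
  assert (Hratio : L * INR d / K <= 1 / 2).
  { apply (Rmult_le_reg_r K); [exact HK |].
    unfold Rdiv. rewrite Rmult_assoc, Rinv_l, Rmult_1_r by lra. unfold K. lra. }
  replace (L * (INR d * C) * exp (K * t) / K) with (C * exp (K * t) * (L * INR d / K)) by (field; lra).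
  replace (C * exp (K * t) / 2) with (C * exp (K * t) * (1 / 2)) by field.
  apply Rmult_le_compat_l; [nra | exact Hratio].
Qed.

Lemma is_derive_picard_iter_diff n s j :
  is_derive (fun s => picard_iter (S n) s j - picard_iter n s j) s
    (G (picard_iter n s) j - match n with O => 0 | S m => G (picard_iter m s) j end).
Proof.
  apply (is_derive_minus (fun s => picard_iter (S n) s j)).
  - apply is_derive_picard_iter. intros; apply continuous_picard_iter.
  - destruct n as [| m].
    + apply (is_derive_ext (fun _ => x0 j)); [reflexivity |].
      apply (is_derive_const (V := R_NormedModule)).
    + apply is_derive_picard_iter. intros; apply continuous_picard_iter.
Qed.

Lemma picard_iter_step n t j : 0 <= t ->
  Rabs (picard_iter (S n) t j - picard_iter n t j) <= A * (1 / 2) ^ n * exp (K * t).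
Proof.
  revert t j. induction n as [| n IH]; intros t j Ht.
  - eapply Rle_trans.
    { apply (abs_le_of_derive_exp_bound (fun s => picard_iter 1 s j - picard_iter 0 s j)
        (fun s => G (picard_iter 0 s) j - 0) B K t picard_rate_pos Ht);
        [| intros s _; apply is_derive_picard_iter_diff |].
      - cbv beta. rewrite !picard_iter_at_0. ring.
      - intros s Hs. rewrite Rminus_0_r.
        assert (1 <= exp (K * s)).
        { pose proof (exp_ineq1_le (K * s)). pose proof (Rmult_le_pos K s (Rlt_le _ _ picard_rate_pos) (proj1 Hs)).
          lra. }
        pose proof field_bound_nonneg. eapply Rle_trans; [apply HB | nra]. }
    right. unfold A. simpl. field. pose proof picard_rate_pos. lra.
  - eapply Rle_trans.
    { apply (abs_le_of_derive_exp_bound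
        (fun s => picard_iter (S (S n)) s j - picard_iter (S n) s j)
        (fun s => G (picard_iter (S n) s) j - G (picard_iter n s) j)
        (L * (INR d * (A * (1 / 2) ^ n))) K t picard_rate_pos Ht);
        [| intros s _; apply is_derive_picard_iter_diff |].
      - cbv beta. rewrite !picard_iter_at_0. ring.
      - intros s Hs. eapply Rle_trans; [apply HL |].
        replace (L * (INR d * (A * (1 / 2) ^ n)) * exp (K * s))
          with (L * (INR d * (A * (1 / 2) ^ n * exp (K * s)))) by ring.
        apply Rmult_le_compat_l; [exact HL0 |].
        apply norm1_le_const. intros i _. apply IH. lra. }
    eapply Rle_trans; [apply picard_contraction |].
    + pose proof picard_scale_nonneg. pose proof (pow_le (1 / 2) n ltac:(lra)). nra.
    + right. simpl. field.
Qed.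

Lemma picard_iter_cauchy n p t j : 0 <= t ->
  Rabs (picard_iter (n + p) t j - picard_iter n t j) <=
  2 * A * exp (K * t) * ((1 / 2) ^ n - (1 / 2) ^ (n + p)).
Proof.
  intros Ht. induction p as [| p IH].
  - rewrite Nat.add_0_r, Rminus_diag, Rabs_R0. right. ring.
  - rewrite Nat.add_succ_r.
    pose proof (picard_iter_step (n + p) t j Ht) as Hstep.
    pose proof (Rabs_triang (picard_iter (S (n + p)) t j - picard_iter (n + p) t j)
                            (picard_iter (n + p) t j - picard_iter n t j)) as Htri.
    replace (picard_iter (S (n + p)) t j - picard_iter (n + p) t j +
             (picard_iter (n + p) t j - picard_iter n t j))
      with (picard_iter (S (n + p)) t j - picard_iter n t j) in Htri by ring.
    change ((1 / 2) ^ S (n + p)) with (1 / 2 * (1 / 2) ^ (n + p)).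
    lra.
Qed.

Lemma picard_iter_cvg t j : 0 <= t -> ex_finite_lim_seq (fun n => picard_iter n t j).
Proof.
  intros Ht. apply ex_lim_seq_cauchy_corr. intros eps.
  destruct (geometric_eventually_small (2 * A * exp (K * t)) eps (cond_pos eps)) as [N HN].
  assert (Hle : forall n m, (N <= n)%nat -> (n <= m)%nat ->
            Rabs (picard_iter m t j - picard_iter n t j) < eps).
  { intros n m Hn Hm. replace m with (n + (m - n))%nat by lia.
    eapply Rle_lt_trans; [apply picard_iter_cauchy, Ht |].
    specialize (HN n Hn). pose proof (pow_le (1 / 2) (n + (m - n)) ltac:(lra)).
    pose proof picard_scale_nonneg. pose proof (exp_pos (K * t)).
    assert (0 <= 2 * A * exp (K * t) * (1 / 2) ^ (n + (m - n))) by (apply Rmult_le_pos; [apply Rmult_le_pos |]; lra).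
    rewrite Rmult_minus_distr_l. lra. }
  exists N. intros n m Hn Hm. destruct (Nat.le_ge_cases n m) as [Hnm | Hmn].
  - rewrite Rabs_minus_sym. apply Hle; assumption.
  - apply Hle; assumption.
Qed.

Definition picard_lim (t : R) (j : nat) : R := real (Lim_seq (fun n => picard_iter n t j)).

Lemma is_lim_seq_picard_iter t j : 0 <= t ->
  is_lim_seq (fun n => picard_iter n t j) (picard_lim t j).
Proof.
  intros Ht. unfold picard_lim. destruct (picard_iter_cvg t j Ht) as [l Hl].
  rewrite (is_lim_seq_unique _ _ Hl). exact Hl.
Qed.

Lemma picard_lim_error t n j : 0 <= t ->
  Rabs (picard_lim t j - picard_iter n t j) <= 2 * A * exp (K * t) * (1 / 2) ^ n.
Proof.
  intros Ht.
  apply (lim_abs_sub_le (fun p => picard_iter (p + n) t j) (fun _ => picard_iter n t j));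
    [apply (is_lim_seq_incr_n (fun p => picard_iter p t j) n), is_lim_seq_picard_iter, Ht
    | apply is_lim_seq_const |].
  intros p. rewrite Nat.add_comm. eapply Rle_trans; [apply picard_iter_cauchy, Ht |].
  pose proof (pow_le (1 / 2) (n + p) ltac:(lra)). pose proof picard_scale_nonneg. pose proof (exp_pos (K * t)).
  assert (0 <= 2 * A * exp (K * t) * (1 / 2) ^ (n + p)) by (apply Rmult_le_pos; [apply Rmult_le_pos |]; lra).
  rewrite Rmult_minus_distr_l. lra.
Qed.

Lemma picard_iter_lipschitz n t s j :
  Rabs (picard_iter n t j - picard_iter n s j) <= B * Rabs (t - s).
Proof.
  destruct n as [| m].
  - simpl. rewrite Rminus_diag, Rabs_R0. apply Rmult_le_pos; [apply field_bound_nonneg | apply Rabs_pos].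
  - apply (bounded_variation (fun t => picard_iter (S m) t j) (fun u => G (picard_iter m u) j)).
    intros u _. split; [| apply HB].
    apply is_derive_picard_iter. intros; apply continuous_picard_iter.
Qed.

Lemma picard_lim_lipschitz t s j : 0 <= t -> 0 <= s ->
  Rabs (picard_lim t j - picard_lim s j) <= B * Rabs (t - s).
Proof.
  intros Ht Hs. apply (lim_abs_sub_le (fun n => picard_iter n t j) (fun n => picard_iter n s j));
    [apply is_lim_seq_picard_iter, Ht | apply is_lim_seq_picard_iter, Hs |].
  intros n. apply picard_iter_lipschitz.
Qed.

(* The limit is only controlled for [t >= 0]; freezing it for [t < 0] makes it continuous on [R]. *)
Definition picard_sol (t : R) (j : nat) : R := picard_lim (Rmax t 0) j.

Lemma continuous_picard_sol t j : continuous (fun t => picard_sol t j) t.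
Proof.
  apply continuous_R_eps. intros e He. pose proof field_bound_nonneg.
  exists (e / (B + 1)). split; [apply Rdiv_lt_0_compat; lra |]. intros y Hy.
  unfold picard_sol. eapply Rle_lt_trans; [apply picard_lim_lipschitz; apply Rmax_r |].
  assert (Hmax : Rabs (Rmax y 0 - Rmax t 0) <= Rabs (y - t)).
  { pose proof (Rle_abs (y - t)) as Hyt. pose proof (Rle_abs (t - y)) as Hty.
    rewrite Rabs_minus_sym in Hty.
    apply Rabs_le_between. unfold Rmax. destruct (Rle_dec y 0), (Rle_dec t 0); lra. }
  assert (Rabs (y - t) * (B + 1) < e).
  { apply (Rmult_lt_compat_r (B + 1)) in Hy; [| lra].
    unfold Rdiv in Hy. rewrite Rmult_assoc, Rinv_l, Rmult_1_r in Hy; lra. }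
  pose proof (Rabs_pos (y - t)). nra.
Qed.

Lemma picard_sol_integral t j : 0 <= t ->
  picard_sol t j = x0 j + RInt (fun s => G (picard_sol s) j) 0 t.
Proof.
  intros Ht. pose proof picard_rate_pos as HK. pose proof picard_scale_nonneg as HA.
  set (err := picard_sol t j - (x0 j + RInt (fun s => G (picard_sol s) j) 0 t)).
  assert (Hcont : forall s, continuous (fun s => G (picard_sol s) j) s).
  { intros s. apply (continuous_lipschitz_comp d G L); [exact HL |]. intros; apply continuous_picard_sol. }
  assert (Hbound : forall n, Rabs err <= 2 * A * exp (K * t) * (1 / 2) ^ n).
  { intros n.
    assert (Hint : Rabs (picard_iter (S n) t j - x0 j - RInt (fun s => G (picard_sol s) j) 0 t) <=
                   A * exp (K * t) * (1 / 2) ^ n).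
    { eapply Rle_trans.
      { apply (abs_le_of_derive_exp_bound
          (fun u => picard_iter (S n) u j - x0 j - RInt (fun s => G (picard_sol s) j) 0 u)
          (fun u => G (picard_iter n u) j - 0 - G (picard_sol u) j)
          (L * (INR d * (2 * A * (1 / 2) ^ n))) K t HK Ht).
        - cbv beta. rewrite picard_iter_at_0, RInt_point. unfold zero. simpl. ring.
        - intros s _.
          apply (is_derive_minus (fun u => picard_iter (S n) u j - x0 j)
                   (fun u => RInt (fun s => G (picard_sol s) j) 0 u));
            [apply (is_derive_minus (fun u => picard_iter (S n) u j) (fun _ => x0 j)) |].
          + apply is_derive_picard_iter. intros; apply continuous_picard_iter.
          + apply (is_derive_const (V := R_NormedModule)).
          + apply is_derive_RInt_0, Hcont.
        - intros s Hs. rewrite Rminus_0_r. eapply Rle_trans; [apply HL |].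
          replace (L * (INR d * (2 * A * (1 / 2) ^ n)) * exp (K * s))
            with (L * (INR d * (2 * A * exp (K * s) * (1 / 2) ^ n))) by ring.
          apply Rmult_le_compat_l; [exact HL0 |].
          apply norm1_le_const. intros i _.
          unfold picard_sol. rewrite Rmax_left by lra. rewrite Rabs_minus_sym.
          apply picard_lim_error. lra. }
      eapply Rle_trans; [apply picard_contraction |].
      - pose proof (pow_le (1 / 2) n ltac:(lra)). apply Rmult_le_pos; [apply Rmult_le_pos |]; lra.
      - right. field. }
    assert (Hlim : Rabs (picard_sol t j - picard_iter (S n) t j) <= A * exp (K * t) * (1 / 2) ^ n).
    { unfold picard_sol. rewrite Rmax_left by lra. eapply Rle_trans; [apply picard_lim_error, Ht |].
      right. simpl. field. }
    pose proof (Rabs_triang (picard_sol t j - picard_iter (S n) t j)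
                  (picard_iter (S n) t j - x0 j - RInt (fun s => G (picard_sol s) j) 0 t)) as Htri.
    unfold err. replace (picard_sol t j - (x0 j + RInt (fun s => G (picard_sol s) j) 0 t))
      with (picard_sol t j - picard_iter (S n) t j +
            (picard_iter (S n) t j - x0 j - RInt (fun s => G (picard_sol s) j) 0 t)) by ring.
    lra. }
  assert (Herr : Rabs err <= 0) by (apply (le_0_of_geometric_bound _ (2 * A * exp (K * t))), Hbound).
  assert (Hzero : err = 0) by (apply Rabs_eq_0; pose proof (Rabs_pos err); lra).
  unfold err in Hzero. lra.
Qed.

Theorem picard_global_existence : exists (z : R -> nat -> R),
  (forall j, z 0 j = x0 j) /\
  (forall t j, continuous (fun t => z t j) t) /\
  (forall t j, 0 < t -> is_derive (fun t => z t j) t (G (z t) j)).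
Proof.
  exists picard_sol. split; [| split; [exact continuous_picard_sol |]].
  - intros j. rewrite picard_sol_integral, RInt_point by lra. apply Rplus_0_r.
  - intros t j Ht.
    apply (is_derive_ext_loc (fun u => x0 j + RInt (fun s => G (picard_sol s) j) 0 u)).
    + exists (mkposreal t Ht). intros y Hy. change (Rabs (y - t) < t) in Hy.
      apply Rabs_lt_between in Hy. symmetry. apply picard_sol_integral. lra.
    + replace (G (picard_sol t) j) with (0 + G (picard_sol t) j) by ring.
      apply (is_derive_plus (fun _ => x0 j)); [apply (is_derive_const (V := R_NormedModule)) |].
      apply is_derive_RInt_0. intros s.
      apply (continuous_lipschitz_comp d G L); [exact HL |]. intros; apply continuous_picard_sol.
Qed.

End Picard.

(** * Functions of two variables and incidence functions *)

Lemma continuous2_eps (g : R -> R -> R) u v :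
  continuous (fun p : R * R => g (fst p) (snd p)) (u, v) ->
  forall e, 0 < e -> exists d, 0 < d /\
    forall x y, Rabs (x - u) < d -> Rabs (y - v) < d -> Rabs (g x y - g u v) < e.
Proof.
  intros H e He.
  destruct (proj1 (filterlim_locally _ _) H (mkposreal e He)) as [d Hd].
  exists d. split; [apply cond_pos |]. intros x y Hx Hy. apply (Hd (x, y)). split; assumption.
Qed.

Lemma uniform_continuity_on_square (g : R -> R -> R) a b :
  (forall s i, continuous (fun p : R * R => g (fst p) (snd p)) (s, i)) ->
  exists d : posreal, forall x y x' y', a <= x <= b -> a <= y <= b ->
    Rabs (x - x') < d -> Rabs (y - y') < d -> Rabs (g x' y' - g x y) < 2.
Proof.
  intros Hc.
  assert (Hloc : forall u v, exists d : posreal, forall x y,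
            Rabs (x - u) < d -> Rabs (y - v) < d -> Rabs (g x y - g u v) < 1).
  { intros u v. destruct (continuous2_eps g u v (Hc u v) 1 ltac:(lra)) as [d [Hd1 Hd2]].
    exists (mkposreal d Hd1). exact Hd2. }
  set (delta := fun u v => proj1_sig (constructive_indefinite_description _ (Hloc u v))).
  assert (Hdelta : forall u v x y, Rabs (x - u) < delta u v -> Rabs (y - v) < delta u v ->
                     Rabs (g x y - g u v) < 1).
  { intros u v. unfold delta. destruct (constructive_indefinite_description _ (Hloc u v)) as [d Hd].
    exact Hd. }
  set (half := fun u v => mkposreal (delta u v / 2) ltac:(pose proof (cond_pos (delta u v)); lra)).
  destruct (compactness_value_2d a b a b half) as [d Hd].
  exists d. intros x y x' y' Hx Hy Hxx Hyy. apply NNPP. intros Hfar.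
  apply (Hd x y Hx Hy). intros [u [v [_ [_ [Hxu [Hyv Hdu]]]]]]. apply Hfar.
  simpl in Hxu, Hyv, Hdu. pose proof (cond_pos (delta u v)).
  assert (Hxy : Rabs (g x y - g u v) < 1) by (apply Hdelta; lra).
  assert (Hxy' : Rabs (g x' y' - g u v) < 1).
  { assert (Htri : forall p q w, Rabs (p - w) <= Rabs (q - p) + Rabs (q - w)).
    { intros p q w. rewrite (Rabs_minus_sym q p).
      replace (p - w) with ((p - q) + (q - w)) by ring. apply Rabs_triang. }
    apply Hdelta.
    - pose proof (Htri x' x u). lra.
    - pose proof (Htri y' y v). lra. }
  replace (g x' y' - g x y) with ((g x' y' - g u v) - (g x y - g u v)) by ring.
  eapply Rle_lt_trans; [apply Rabs_triang | rewrite Rabs_Ropp; lra].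
Qed.

Lemma bounded_on_square (g : R -> R -> R) a b :
  (forall s i, continuous (fun p : R * R => g (fst p) (snd p)) (s, i)) ->
  exists P, forall s i, a <= s <= b -> a <= i <= b -> Rabs (g s i) <= P.
Proof.
  intros Hc. destruct (uniform_continuity_on_square g a b Hc) as [d Hd].
  pose proof (cond_pos d) as Hdpos.
  assert (Hchain : forall n x y, a <= x <= b -> a <= y <= b ->
            x - a <= INR n * (d / 2) -> y - a <= INR n * (d / 2) ->
            Rabs (g x y) <= Rabs (g a a) + 2 * INR n).
  { induction n as [| n IH]; intros x y Hx Hy Hxn Hyn.
    - simpl in *. replace x with a by lra. replace y with a by lra. lra.
    - rewrite S_INR in *. pose proof (pos_INR n).
      set (x' := Rmax a (x - d / 2)). set (y' := Rmax a (y - d / 2)).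
      assert (Hx' : a <= x' <= b /\ x' - a <= INR n * (d / 2) /\ Rabs (x' - x) < d).
      { unfold x', Rmax. destruct (Rle_dec a (x - d / 2)); (split; [lra | split; [nra |]]);
          apply Rabs_lt_between; lra. }
      assert (Hy' : a <= y' <= b /\ y' - a <= INR n * (d / 2) /\ Rabs (y' - y) < d).
      { unfold y', Rmax. destruct (Rle_dec a (y - d / 2)); (split; [lra | split; [nra |]]);
          apply Rabs_lt_between; lra. }
      destruct Hx' as [Hx'1 [Hx'2 Hx'3]]. destruct Hy' as [Hy'1 [Hy'2 Hy'3]].
      specialize (IH x' y' Hx'1 Hy'1 Hx'2 Hy'2).
      specialize (Hd x' y' x y Hx'1 Hy'1 Hx'3 Hy'3).
      pose proof (Rabs_triang (g x' y') (g x y - g x' y')) as Htri.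
      replace (g x' y' + (g x y - g x' y')) with (g x y) in Htri by ring.
      lra. }
  destruct (INR_archimed (d / 2) (b - a) ltac:(lra)) as [n Hn].
  exists (Rabs (g a a) + 2 * INR n). intros s i Hs Hi. apply Hchain; lra.
Qed.

Lemma C1_lipschitz_on_square (F : R -> R -> R) a b : C1_2d F ->
  exists LF, 0 <= LF /\ forall x y x' y', a <= x <= b -> a <= y <= b -> a <= x' <= b -> a <= y' <= b ->
    Rabs (F x' y' - F x y) <= LF * (Rabs (x' - x) + Rabs (y' - y)).
Proof.
  intros HC.
  destruct (bounded_on_square (dS F) (2 * a - b) (2 * b - a)) as [P1 HP1];
    [intros s i; apply (HC s i) |].
  destruct (bounded_on_square (dI F) (2 * a - b) (2 * b - a)) as [P2 HP2];
    [intros s i; apply (HC s i) |].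
  set (LF := Rabs P1 + Rabs P2).
  pose proof (Rle_abs P1). pose proof (Rle_abs P2). pose proof (Rabs_pos P1). pose proof (Rabs_pos P2).
  exists LF. split; [unfold LF; lra |]. intros x y x' y' Hx Hy Hx' Hy'.
  assert (Hstep1 : Rabs (F x' y - F x y) <= LF * Rabs (x' - x)).
  { apply (bounded_variation (fun s => F s y) (fun s => dS F s y)). intros t Ht.
    split; [apply Derive_correct, (HC t y) |].
    assert (Rabs (x' - x) <= b - a) by (apply Rabs_le_between; lra).
    apply Rabs_le_between in Ht. unfold LF. eapply Rle_trans; [apply HP1; lra | lra]. }
  assert (Hstep2 : Rabs (F x' y' - F x' y) <= LF * Rabs (y' - y)).
  { apply (bounded_variation (fun i => F x' i) (fun i => dI F x' i)). intros t Ht.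
    split; [apply Derive_correct, (HC x' t) |].
    assert (Rabs (y' - y) <= b - a) by (apply Rabs_le_between; lra).
    apply Rabs_le_between in Ht. unfold LF. eapply Rle_trans; [apply HP2; lra | lra]. }
  pose proof (Rabs_triang (F x' y' - F x' y) (F x' y - F x y)) as Htri.
  replace (F x' y' - F x' y + (F x' y - F x y)) with (F x' y' - F x y) in Htri by ring.
  lra.
Qed.

Section Incidence.

Variables (F f : R -> R -> R).
Hypothesis HF : incidence_hyp F f.

Lemma incidence_C1 : C1_2d F.
Proof. apply HF. Qed.

Lemma incidence_factor_C1 : C1_2d f.
Proof. apply HF. Qed.

Lemma incidence_factorization s i : 0 <= s -> 0 <= i -> F s i = i * f s i.
Proof. apply HF. Qed.

Lemma incidence_nonneg s i : 0 <= s -> 0 <= i -> 0 <= F s i.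
Proof. apply HF. Qed.

Lemma incidence_factor_nonneg s i : 0 <= s -> 0 <= i -> 0 <= f s i.
Proof. apply HF. Qed.

Lemma incidence_zero_S i : 0 <= i -> F 0 i = 0.
Proof. apply HF. Qed.

Lemma incidence_zero_I s : 0 <= s -> F s 0 = 0.
Proof. apply HF. Qed.

Lemma incidence_factor_derivatives s i : 0 <= s -> 0 <= i -> dS f s i > 0 /\ dI f s i <= 0.
Proof. apply HF. Qed.

Lemma incidence_factor_mono_S s s' i : 0 <= s <= s' -> 0 <= i -> f s i <= f s' i.
Proof.
  intros Hs Hi. apply (le_of_derive_nonneg_closed (fun s => f s i) (fun s => dS f s i)); [lra | |].
  - intros x _. apply Derive_correct, (incidence_factor_C1 x i).
  - intros x Hx. apply Rlt_le, (incidence_factor_derivatives x i); lra.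
Qed.

Lemma incidence_factor_antitone_I s i i' : 0 <= s -> 0 <= i <= i' -> f s i' <= f s i.
Proof.
  intros Hs Hi.
  cut (- f s i <= - f s i'); [lra |].
  apply (le_of_derive_nonneg_closed (fun i => - f s i) (fun i => - dI f s i)); [lra | |].
  - intros x _. apply (is_derive_opp (fun i => f s i)), Derive_correct, (incidence_factor_C1 s x).
  - intros x Hx. pose proof (proj2 (incidence_factor_derivatives s x Hs ltac:(lra))). lra.
Qed.

Lemma incidence_factor_le_at_0 s s' i : 0 <= s <= s' -> 0 <= i -> f s i <= f s' 0.
Proof.
  intros Hs Hi. apply Rle_trans with (f s 0).
  - apply incidence_factor_antitone_I; lra.
  - apply incidence_factor_mono_S; lra.
Qed.

Lemma incidence_dI_at_0 s : 0 <= s -> dI F s 0 = f s 0.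
Proof.
  intros Hs.
  assert (Hd : derivable_pt_lim (fun i => F s i) 0 (dI F s 0)).
  { apply is_derive_Reals, Derive_correct, (incidence_C1 s 0). }
  set (l := dI F s 0) in *.
  apply Rminus_diag_uniq, Rabs_eq_0, Rle_antisym; [| apply Rabs_pos].
  apply Rnot_lt_le. intros Hgap. set (e := Rabs (l - f s 0) / 2).
  assert (He : 0 < e) by (unfold e; lra).
  destruct (Hd e He) as [d1 Hd1].
  destruct (continuous2_eps f s 0 (proj1 (proj2 (proj2 (incidence_factor_C1 s 0)))) e He)
    as [d2 [Hd2 Hcont]].
  pose proof (cond_pos d1).
  set (h := Rmin (d1 / 2) (d2 / 2)).
  assert (Hh : 0 < h /\ h < d1 /\ h < d2).
  { unfold h. split; [apply Rmin_glb_lt; lra |].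
    split; [eapply Rle_lt_trans; [apply Rmin_l | lra] | eapply Rle_lt_trans; [apply Rmin_r | lra]]. }
  specialize (Hd1 h ltac:(lra) ltac:(rewrite Rabs_pos_eq; lra)).
  rewrite Rplus_0_l, incidence_factorization, incidence_zero_I in Hd1 by lra.
  replace ((h * f s h - 0) / h) with (f s h) in Hd1 by (field; lra).
  specialize (Hcont s h ltac:(rewrite Rminus_diag, Rabs_R0; lra) ltac:(rewrite Rminus_0_r, Rabs_pos_eq; lra)).
  pose proof (Rabs_triang (- (f s h - l)) (f s h - f s 0)) as Htri.
  replace (- (f s h - l) + (f s h - f s 0)) with (l - f s 0) in Htri by ring.
  rewrite Rabs_Ropp in Htri. unfold e in *. lra.
Qed.

End Incidence.

(** * Clamped fields and Lipschitz bounds on a box *)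

Definition clamp (M y : R) : R := Rmin M (Rmax 0 y).

Lemma clamp_range M y : 0 <= M -> 0 <= clamp M y <= M.
Proof. intros HM. unfold clamp, Rmin, Rmax. repeat destruct Rle_dec; lra. Qed.

Lemma clamp_id M y : 0 <= y <= M -> clamp M y = y.
Proof. intros Hy. unfold clamp, Rmin, Rmax. repeat destruct Rle_dec; lra. Qed.

Lemma clamp_nonpos M y : 0 <= M -> y <= 0 -> clamp M y = 0.
Proof. intros HM Hy. unfold clamp, Rmin, Rmax. repeat destruct Rle_dec; lra. Qed.

Lemma clamp_lipschitz M a b : 0 <= M -> Rabs (clamp M a - clamp M b) <= Rabs (a - b).
Proof.
  intros HM. pose proof (Rle_abs (a - b)). pose proof (Rle_abs (b - a)) as Hba.
  rewrite Rabs_minus_sym in Hba.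
  apply Rabs_le_between. unfold clamp, Rmin, Rmax. repeat destruct Rle_dec; lra.
Qed.

Definition in_box (M : R) (x : nat -> R) : Prop := forall i, 0 <= x i <= M.

Definition lipschitz_on_box (M : R) (h : (nat -> R) -> R) (L : R) : Prop :=
  0 <= L /\ forall x y, in_box M x -> in_box M y ->
    Rabs (h x - h y) <= L * norm1 4 (fun i => x i - y i).

Section BoxLipschitz.

Variable M : R.

Lemma lipschitz_on_box_const c : lipschitz_on_box M (fun _ => c) 0.
Proof. split; [lra |]. intros x y _ _. rewrite Rminus_diag, Rabs_R0, Rmult_0_l. lra. Qed.

Lemma lipschitz_on_box_coord i : (i < 4)%nat -> lipschitz_on_box M (fun x => x i) 1.
Proof.
  intros Hi. split; [lra |]. intros x y _ _. rewrite Rmult_1_l.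
  apply (Rabs_le_norm1 4 (fun i => x i - y i) i Hi).
Qed.

Lemma lipschitz_on_box_plus h1 h2 L1 L2 : lipschitz_on_box M h1 L1 -> lipschitz_on_box M h2 L2 ->
  lipschitz_on_box M (fun x => h1 x + h2 x) (L1 + L2).
Proof.
  intros [HL1 H1] [HL2 H2]. split; [lra |]. intros x y Hx Hy.
  specialize (H1 x y Hx Hy). specialize (H2 x y Hx Hy).
  pose proof (Rabs_triang (h1 x - h1 y) (h2 x - h2 y)) as Htri.
  replace (h1 x - h1 y + (h2 x - h2 y)) with (h1 x + h2 x - (h1 y + h2 y)) in Htri by ring.
  lra.
Qed.

Lemma lipschitz_on_box_scal c h L : lipschitz_on_box M h L ->
  lipschitz_on_box M (fun x => c * h x) (Rabs c * L).
Proof.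
  intros [HL H]. split; [apply Rmult_le_pos; [apply Rabs_pos | exact HL] |]. intros x y Hx Hy.
  rewrite <- Rmult_minus_distr_l, Rabs_mult, Rmult_assoc.
  apply Rmult_le_compat_l; [apply Rabs_pos | apply H; assumption].
Qed.

Lemma lipschitz_on_box_minus h1 h2 L1 L2 : lipschitz_on_box M h1 L1 -> lipschitz_on_box M h2 L2 ->
  lipschitz_on_box M (fun x => h1 x - h2 x) (L1 + Rabs (-1) * L2).
Proof.
  intros H1 H2. pose proof (lipschitz_on_box_plus _ _ _ _ H1 (lipschitz_on_box_scal (-1) _ _ H2)) as H.
  destruct H as [HL H]. split; [exact HL |]. intros x y Hx Hy.
  replace (h1 x - h2 x - (h1 y - h2 y)) with (h1 x + -1 * h2 x - (h1 y + -1 * h2 y)) by ring.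
  apply H; assumption.
Qed.

Lemma lipschitz_on_box_coord_mult i j : (i < 4)%nat -> (j < 4)%nat -> 0 <= M ->
  lipschitz_on_box M (fun x => x i * x j) (2 * M).
Proof.
  intros Hi Hj HM. split; [lra |]. intros x y Hx Hy.
  pose proof (Rabs_le_norm1 4 (fun i => x i - y i) i Hi).
  pose proof (Rabs_le_norm1 4 (fun i => x i - y i) j Hj). cbv beta in *.
  specialize (Hx i) as Hxi. specialize (Hx j). specialize (Hy i) as Hyi. specialize (Hy j).
  replace (x i * x j - y i * y j) with (x j * (x i - y i) + y i * (x j - y j)) by ring.
  eapply Rle_trans; [apply Rabs_triang |]. rewrite !Rabs_mult, (Rabs_pos_eq (x j)), (Rabs_pos_eq (y i)) by lra.
  pose proof (Rabs_pos (x i - y i)). pose proof (Rabs_pos (x j - y j)). nra.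
Qed.

Lemma lipschitz_on_box_comp2 (F : R -> R -> R) LF i j : (i < 4)%nat -> (j < 4)%nat -> 0 <= LF ->
  (forall a b a' b', 0 <= a <= M -> 0 <= b <= M -> 0 <= a' <= M -> 0 <= b' <= M ->
     Rabs (F a' b' - F a b) <= LF * (Rabs (a' - a) + Rabs (b' - b))) ->
  lipschitz_on_box M (fun x => F (x i) (x j)) (2 * LF).
Proof.
  intros Hi Hj HLF HF. split; [lra |]. intros x y Hx Hy.
  pose proof (Rabs_le_norm1 4 (fun i => x i - y i) i Hi).
  pose proof (Rabs_le_norm1 4 (fun i => x i - y i) j Hj). cbv beta in *.
  eapply Rle_trans; [apply HF; auto |]. nra.
Qed.

Lemma lipschitz_on_box_weaken h L L' : L <= L' -> lipschitz_on_box M h L -> lipschitz_on_box M h L'.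
Proof.
  intros HLL' [HL H]. split; [lra |]. intros x y Hx Hy.
  eapply Rle_trans; [apply H; assumption |].
  apply Rmult_le_compat_r; [apply norm1_nonneg | exact HLL'].
Qed.

Lemma lipschitz_on_box_ext h h' L : (forall x, h x = h' x) ->
  lipschitz_on_box M h L -> lipschitz_on_box M h' L.
Proof. intros Hext [HL H]. split; [exact HL |]. intros x y Hx Hy. rewrite <- !Hext. apply H; assumption. Qed.

End BoxLipschitz.

(** * Existence of solutions of the model *)

Lemma dist4_component_le a1 a2 a3 a4 b1 b2 b3 b4 :
  let D := dist4 a1 a2 a3 a4 b1 b2 b3 b4 in
  Rabs (a1 - b1) <= D /\ Rabs (a2 - b2) <= D /\ Rabs (a3 - b3) <= D /\ Rabs (a4 - b4) <= D.
Proof.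
  unfold dist4. cbv zeta.
  assert (Habs : forall u w, u ^ 2 <= w -> Rabs u <= sqrt w).
  { intros u w Hle. rewrite <- sqrt_Rsqr_abs. apply sqrt_le_1_alt. unfold Rsqr. lra. }
  pose proof (pow2_ge_0 (a1 - b1)). pose proof (pow2_ge_0 (a2 - b2)).
  pose proof (pow2_ge_0 (a3 - b3)). pose proof (pow2_ge_0 (a4 - b4)).
  repeat split; apply Habs; lra.
Qed.

Lemma dist4_le_sum a1 a2 a3 a4 b1 b2 b3 b4 :
  dist4 a1 a2 a3 a4 b1 b2 b3 b4 <= Rabs (a1 - b1) + Rabs (a2 - b2) + Rabs (a3 - b3) + Rabs (a4 - b4).
Proof.
  unfold dist4.
  set (s := Rabs (a1 - b1) + Rabs (a2 - b2) + Rabs (a3 - b3) + Rabs (a4 - b4)).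
  assert (Hsq : forall u, u ^ 2 = Rabs u * Rabs u).
  { intros u. rewrite <- Rabs_mult, Rabs_pos_eq; [ring | nra]. }
  pose proof (Rabs_pos (a1 - b1)). pose proof (Rabs_pos (a2 - b2)).
  pose proof (Rabs_pos (a3 - b3)). pose proof (Rabs_pos (a4 - b4)).
  rewrite <- (sqrt_pow2 s) by (unfold s; lra). apply sqrt_le_1_alt.
  replace (s ^ 2) with (s * s) by ring. rewrite !Hsq. unfold s. nra.
Qed.

Section Model.

Variables (Lam mu r k gam1 gam2 v1 v2 : R) (F1 f1 F2 f2 : R -> R -> R).
Hypotheses (HLam : 0 < Lam) (Hmu : 0 < mu) (Hr : 0 < r) (Hk : 0 < k)
  (Hgam1 : 0 < gam1) (Hgam2 : 0 < gam2) (Hv1 : 0 <= v1) (Hv2 : 0 <= v2)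
  (HF1 : incidence_hyp F1 f1) (HF2 : incidence_hyp F2 f2).

Let lm := lam r mu.
Let a1 := alpha gam1 v1 mu.
Let a2 := alpha gam2 v2 mu.
Let s0 := E0_S Lam r mu.
Let vs := E0_V Lam r mu.

Lemma rates_gt_mu : mu < lm /\ mu < a1 /\ mu < a2.
Proof. unfold lm, a1, a2, lam, alpha. lra. Qed.

Lemma equilibrium_identities : 0 < s0 /\ 0 < vs /\ Lam = lm * s0 /\ mu * vs = r * s0 /\ s0 + vs = Lam / mu.
Proof.
  pose proof rates_gt_mu. unfold s0, vs, E0_S, E0_V. fold lm.
  split; [apply Rdiv_lt_0_compat; lra |]. split; [apply Rdiv_lt_0_compat; nra |].
  split; [field; lra |]. split; [field; lra |]. unfold lm, lam. field. lra.
Qed.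

(* The state [(S, V, I1, I2)] is stored as [(p 0, p 1, p 2, p 3)]. *)
Definition model_field (p : nat -> R) (j : nat) : R :=
  match j with
  | O => Lam - F1 (p 0%nat) (p 2%nat) - F2 (p 0%nat) (p 3%nat) - lm * p 0%nat
  | S O => r * p 0%nat - (mu + k * p 3%nat) * p 1%nat
  | S (S O) => F1 (p 0%nat) (p 2%nat) - a1 * p 2%nat
  | S (S (S O)) => F2 (p 0%nat) (p 3%nat) + k * p 3%nat * p 1%nat - a2 * p 3%nat
  | _ => 0
  end.

Lemma model_field_ext p q j : (forall i, (i < 4)%nat -> p i = q i) -> model_field p j = model_field q j.
Proof.
  intros H. destruct j as [| [| [| [| j]]]]; simpl; rewrite ?(H 0%nat), ?(H 1%nat), ?(H 2%nat), ?(H 3%nat) by lia;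
    reflexivity.
Qed.

Let Mbox := Lam / mu + 2.

Lemma Mbox_pos : 0 < Mbox.
Proof. unfold Mbox. pose proof (Rdiv_lt_0_compat _ _ HLam Hmu). lra. Qed.

Lemma model_field_lipschitz_on_box : exists L, forall j, lipschitz_on_box Mbox (fun p => model_field p j) L.
Proof.
  pose proof Mbox_pos.
  destruct (C1_lipschitz_on_square F1 0 Mbox (incidence_C1 F1 f1 HF1)) as [L1 [HL1 HF1lip]].
  destruct (C1_lipschitz_on_square F2 0 Mbox (incidence_C1 F2 f2 HF2)) as [L2 [HL2 HF2lip]].
  assert (HF1box := lipschitz_on_box_comp2 Mbox F1 L1 0 2 ltac:(lia) ltac:(lia) HL1 HF1lip).
  assert (HF2box := lipschitz_on_box_comp2 Mbox F2 L2 0 3 ltac:(lia) ltac:(lia) HL2 HF2lip).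
  assert (Hc : forall i, (i < 4)%nat -> lipschitz_on_box Mbox (fun p => p i) 1)
    by (intros; apply lipschitz_on_box_coord; assumption).
  assert (H31 := lipschitz_on_box_coord_mult Mbox 3 1 ltac:(lia) ltac:(lia) ltac:(lra)).
  assert (Hscal : forall c i, (i < 4)%nat -> lipschitz_on_box Mbox (fun p => c * p i) (Rabs c * 1))
    by (intros; apply lipschitz_on_box_scal, Hc; assumption).
  assert (Hk31 := lipschitz_on_box_scal Mbox k _ _ H31).
  assert (Hcomp : forall j, exists L, lipschitz_on_box Mbox (fun p => model_field p j) L).
  { intros [| [| [| [| j]]]]; eexists; simpl.
    - repeat apply lipschitz_on_box_minus; try exact HF1box; try exact HF2box;
        [apply lipschitz_on_box_const | apply Hscal; lia].
    - apply (lipschitz_on_box_ext _ (fun p => r * p 0%nat - (mu * p 1%nat + k * (p 3%nat * p 1%nat))));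
        [intros; ring |].
      apply lipschitz_on_box_minus; [apply Hscal; lia |].
      apply lipschitz_on_box_plus; [apply Hscal; lia | exact Hk31].
    - apply lipschitz_on_box_minus; [exact HF1box | apply Hscal; lia].
    - apply (lipschitz_on_box_ext _ (fun p => F2 (p 0%nat) (p 3%nat) + k * (p 3%nat * p 1%nat) - a2 * p 3%nat));
        [intros; ring |].
      apply lipschitz_on_box_minus; [apply lipschitz_on_box_plus; [exact HF2box | exact Hk31] |].
      apply Hscal; lia.
    - apply lipschitz_on_box_const. }
  destruct (Hcomp 0%nat) as [L0 HL0]. destruct (Hcomp 1%nat) as [L1' HL1'].
  destruct (Hcomp 2%nat) as [L2' HL2']. destruct (Hcomp 3%nat) as [L3 HL3].
  pose proof (proj1 HL0). pose proof (proj1 HL1'). pose proof (proj1 HL2'). pose proof (proj1 HL3).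
  exists (L0 + L1' + L2' + L3). intros [| [| [| [| j]]]];
    [revert HL0 | revert HL1' | revert HL2' | revert HL3 |]; try (apply lipschitz_on_box_weaken; lra).
  apply (lipschitz_on_box_weaken _ _ 0); [lra |].
  apply (lipschitz_on_box_ext _ (fun _ => 0)); [reflexivity | apply lipschitz_on_box_const].
Qed.

(* Clamping makes the field globally Lipschitz and bounded, so that Picard iteration applies; along
   solutions starting in [R^4_+] with total population at most [Lam / mu + 1] the clamp is inactive. *)
Definition clamped_field (x : nat -> R) (j : nat) : R := model_field (fun i => clamp Mbox (x i)) j.

Lemma clamp_in_box x : in_box Mbox (fun i => clamp Mbox (x i)).
Proof. intros i. apply clamp_range. pose proof Mbox_pos. lra. Qed.

Lemma clamped_field_lipschitz : exists L, 0 <= L /\ lipschitz_norm1 4 clamped_field L.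
Proof.
  destruct model_field_lipschitz_on_box as [L HL]. exists L. split; [apply (HL 0%nat) |].
  intros x y j. destruct (HL j) as [HL0 H]. pose proof Mbox_pos.
  eapply Rle_trans; [apply H; apply clamp_in_box |].
  apply Rmult_le_compat_l; [exact HL0 |].
  apply norm1_le_mono. intros i _. apply clamp_lipschitz. lra.
Qed.

Lemma model_field_at_origin j : Rabs (model_field (fun _ => 0) j) <= Lam.
Proof.
  destruct j as [| [| [| [| j]]]]; simpl;
    rewrite ?(incidence_zero_I F1 f1 HF1), ?(incidence_zero_I F2 f2 HF2) by lra;
    ring_simplify; rewrite ?Rabs_R0, ?Rabs_pos_eq; lra.
Qed.

Lemma clamped_field_bounded : exists B, forall x j, Rabs (clamped_field x j) <= B.
Proof.
  destruct model_field_lipschitz_on_box as [L HL]. pose proof Mbox_pos as HM.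
  exists (L * (INR 4 * Mbox) + Lam). intros x j. destruct (HL j) as [HL0 H].
  assert (Hzero : in_box Mbox (fun _ => 0)) by (intros i; lra).
  specialize (H _ _ (clamp_in_box x) Hzero).
  assert (Hnorm : norm1 4 (fun i => clamp Mbox (x i) - 0) <= INR 4 * Mbox).
  { apply norm1_le_const. intros i _. rewrite Rminus_0_r, Rabs_pos_eq; apply clamp_range; lra. }
  pose proof (model_field_at_origin j).
  pose proof (Rabs_triang (model_field (fun i => clamp Mbox (x i)) j - model_field (fun _ => 0) j)
                (model_field (fun _ => 0) j)) as Htri.
  replace (model_field (fun i => clamp Mbox (x i)) j - model_field (fun _ => 0) j + model_field (fun _ => 0) j)
    with (clamped_field x j) in Htri by (unfold clamped_field; ring).
  pose proof (Rmult_le_compat_l L _ _ HL0 Hnorm). lra.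
Qed.

Section ClampedSolution.

Variables (x0 : nat -> R) (z : R -> nat -> R).
Hypotheses (Hx0 : forall i, (i < 4)%nat -> 0 <= x0 i)
  (Htot0 : x0 0%nat + x0 1%nat + x0 2%nat + x0 3%nat <= Lam / mu + 1)
  (Hz0 : forall j, z 0 j = x0 j) (Hzc : forall t j, continuous (fun t => z t j) t)
  (Hzd : forall t j, 0 < t -> is_derive (fun t => z t j) t (clamped_field (z t) j)).

Lemma clamped_solution_nonneg j : (j < 4)%nat -> forall t, 0 <= t -> 0 <= z t j.
Proof.
  intros Hj. apply (nonneg_invariant (fun t => z t j) (fun t => clamped_field (z t) j) 1);
    [lra | intros t; apply Hzc | intros t Ht; apply Hzd, Ht | rewrite Hz0; apply Hx0, Hj |].
  intros t Ht [_ Hneg]. pose proof Mbox_pos.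
  assert (Hzero : clamp Mbox (z t j) = 0) by (apply clamp_nonpos; lra).
  assert (Hcl : forall i, 0 <= clamp Mbox (z t i)) by (intros i; apply clamp_range; lra).
  unfold clamped_field.
  destruct j as [| [| [| [| j]]]]; [| | | | lia]; simpl; rewrite Hzero.
  - rewrite (incidence_zero_S F1 f1 HF1), (incidence_zero_S F2 f2 HF2) by apply Hcl. lra.
  - specialize (Hcl 0%nat). nra.
  - rewrite (incidence_zero_I F1 f1 HF1) by apply Hcl. lra.
  - rewrite (incidence_zero_I F2 f2 HF2) by apply Hcl. lra.
Qed.

Let total t := z t 0%nat + z t 1%nat + z t 2%nat + z t 3%nat.

Lemma clamped_solution_total_bound t : 0 <= t -> total t <= Lam / mu + 1.
Proof.
  intros Ht. cut (0 <= Lam / mu + 1 - total t); [lra |].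
  apply (nonneg_invariant (fun t => Lam / mu + 1 - total t)
    (fun t => - (clamped_field (z t) 0 + clamped_field (z t) 1 + clamped_field (z t) 2 + clamped_field (z t) 3)) 1);
    [lra | | | | | exact Ht].
  - intros u. apply (continuous_minus (fun _ => Lam / mu + 1) total); [apply continuous_const |].
    exact (continuous_Rplus _ _ _ (continuous_Rplus _ _ _
             (continuous_Rplus _ _ _ (Hzc u 0%nat) (Hzc u 1%nat)) (Hzc u 2%nat)) (Hzc u 3%nat)).
  - intros u Hu.
    set (field_sum := clamped_field (z u) 0 + clamped_field (z u) 1 + clamped_field (z u) 2
                      + clamped_field (z u) 3).
    replace (- field_sum) with (0 - field_sum) by ring.
    apply (is_derive_minus (fun _ => Lam / mu + 1) total); [apply (is_derive_const (V := R_NormedModule)) |].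
    pose proof (fun j => Hzd u j Hu) as Hd.
    exact (is_derive_Rplus _ _ _ _ _ (is_derive_Rplus _ _ _ _ _
             (is_derive_Rplus _ _ _ _ _ (Hd 0%nat) (Hd 1%nat)) (Hd 2%nat)) (Hd 3%nat)).
  - unfold total. rewrite !Hz0. lra.
  - intros u Hu [Hbelow Habove]. unfold total in Hbelow, Habove.
    assert (Hnn : forall j, (j < 4)%nat -> 0 <= z u j)
      by (intros j Hj; apply clamped_solution_nonneg; [exact Hj | lra]).
    pose proof (Hnn 0%nat ltac:(lia)). pose proof (Hnn 1%nat ltac:(lia)).
    pose proof (Hnn 2%nat ltac:(lia)). pose proof (Hnn 3%nat ltac:(lia)).
    pose proof rates_gt_mu as [_ [Ha1 Ha2]].
    unfold clamped_field. simpl. rewrite !clamp_id by (unfold Mbox; lra).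
    assert (Hmass : Lam + mu < mu * (z u 0%nat + z u 1%nat + z u 2%nat + z u 3%nat)).
    { replace (Lam + mu) with (mu * (Lam / mu + 1)) by (field; lra).
      apply Rmult_lt_compat_l; lra. }
    assert (0 <= (a1 - mu) * z u 2%nat) by (apply Rmult_le_pos; lra).
    assert (0 <= (a2 - mu) * z u 3%nat) by (apply Rmult_le_pos; lra).
    unfold lm, lam. lra.
Qed.

Lemma clamped_solution_unclamped t j : 0 <= t -> (j < 4)%nat -> clamp Mbox (z t j) = z t j.
Proof.
  intros Ht Hj. apply clamp_id.
  pose proof (clamped_solution_total_bound t Ht). unfold total in *.
  pose proof (clamped_solution_nonneg 0 ltac:(lia) t Ht). pose proof (clamped_solution_nonneg 1 ltac:(lia) t Ht).
  pose proof (clamped_solution_nonneg 2 ltac:(lia) t Ht). pose proof (clamped_solution_nonneg 3 ltac:(lia) t Ht).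
  unfold Mbox. destruct j as [| [| [| [| j]]]]; lra || lia.
Qed.

Lemma clamped_solution_is_solution : is_solution F1 F2 Lam mu r k gam1 gam2 v1 v2
  (fun t => z t 0%nat) (fun t => z t 1%nat) (fun t => z t 2%nat) (fun t => z t 3%nat).
Proof.
  split; [intros t Ht; repeat split; apply clamped_solution_nonneg; (lia || lra) |].
  split; [apply continuous_at_right, Hzc |]. split; [apply continuous_at_right, Hzc |].
  split; [apply continuous_at_right, Hzc |]. split; [apply continuous_at_right, Hzc |].
  intros t Ht. pose proof (fun j => clamped_solution_unclamped t j (Rlt_le _ _ Ht)) as Hid.
  assert (Hd : forall j, is_derive (fun t => z t j) t (model_field (z t) j)).
  { intros j. rewrite <- (model_field_ext (fun i => clamp Mbox (z t i))); [apply Hzd, Ht |].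
    intros i Hi. apply Hid, Hi. }
  split; [| split; [| split]]; apply Hd.
Qed.

End ClampedSolution.

Lemma model_solution_exists (x0 : nat -> R) :
  (forall i, (i < 4)%nat -> 0 <= x0 i) -> x0 0%nat + x0 1%nat + x0 2%nat + x0 3%nat <= Lam / mu + 1 ->
  exists S V I1 I2, is_solution F1 F2 Lam mu r k gam1 gam2 v1 v2 S V I1 I2 /\
    S 0 = x0 0%nat /\ V 0 = x0 1%nat /\ I1 0 = x0 2%nat /\ I2 0 = x0 3%nat.
Proof.
  intros Hx0 Htot0.
  destruct clamped_field_lipschitz as [L [HL0 HL]]. destruct clamped_field_bounded as [B HB].
  destruct (picard_global_existence 4 clamped_field L B x0 HL HL0 HB) as [z [Hz0 [Hzc Hzd]]].
  exists (fun t => z t 0%nat), (fun t => z t 1%nat), (fun t => z t 2%nat), (fun t => z t 3%nat).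
  split; [exact (clamped_solution_is_solution x0 z Hx0 Htot0 Hz0 Hzc Hzd) |].
  rewrite !Hz0. repeat split.
Qed.

(** * Instability when [R0 > 1] *)

Lemma E0_stable_nearby_orbits : E0_stable F1 F2 Lam mu r k gam1 gam2 v1 v2 ->
  forall d, 0 < d -> exists rho, 0 < rho /\ forall a b, 0 <= a <= rho -> 0 <= b <= rho ->
    exists S V I1 I2, is_solution F1 F2 Lam mu r k gam1 gam2 v1 v2 S V I1 I2 /\
      I1 0 = a /\ I2 0 = b /\
      forall t, 0 <= t -> Rabs (S t - s0) < d /\ Rabs (V t - vs) < d /\ I1 t < d /\ I2 t < d.
Proof.
  intros Hst d Hd. destruct (Hst d Hd) as [delta [Hdelta Hstay]].
  destruct equilibrium_identities as [Hs0 [Hvs [_ [_ Hsum]]]].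
  (* [rho <= 1/2] keeps the initial total population below [Lam / mu + 1]. *)
  exists (Rmin (delta / 4) (1 / 2)). split; [apply Rmin_glb_lt; lra |].
  intros a b Ha Hb. pose proof (Rmin_l (delta / 4) (1 / 2)). pose proof (Rmin_r (delta / 4) (1 / 2)).
  destruct (model_solution_exists (fun j => match j with 0 => s0 | 1 => vs | 2 => a | _ => b end)%nat)
    as [S [V [I1 [I2 [Hsol [HS0 [HV0 [HI10 HI20]]]]]]]];
    [intros [| [| [| [| i]]]] Hi; simpl; lra | simpl; lra |].
  simpl in HS0, HV0, HI10, HI20.
  exists S, V, I1, I2. split; [exact Hsol |]. split; [exact HI10 |]. split; [exact HI20 |].
  intros t Ht.
  assert (Hinit : dist4 (S 0) (V 0) (I1 0) (I2 0) (E0_S Lam r mu) (E0_V Lam r mu) 0 0 < delta).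
  { eapply Rle_lt_trans; [apply dist4_le_sum |]. fold s0 vs.
    rewrite HS0, HV0, HI10, HI20, !Rminus_diag, !Rminus_0_r, Rabs_R0, !Rabs_pos_eq by lra. lra. }
  specialize (Hstay S V I1 I2 Hsol Hinit t Ht).
  destruct (dist4_component_le (S t) (V t) (I1 t) (I2 t) s0 vs 0 0) as [H1 [H2 [H3 H4]]].
  rewrite Rminus_0_r in H3, H4. pose proof (Rle_abs (I1 t)). pose proof (Rle_abs (I2 t)).
  fold s0 vs in Hstay. repeat split; lra.
Qed.

Lemma E0_unstable_of_I1_growth : a1 < f1 s0 0 -> E0_unstable F1 F2 Lam mu r k gam1 gam2 v1 v2.
Proof.
  intros Hgrow Hst. destruct equilibrium_identities as [Hs0 _].
  set (c := (f1 s0 0 - a1) / 2).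
  destruct (continuous2_eps f1 s0 0 (proj1 (proj2 (proj2 (incidence_factor_C1 F1 f1 HF1 s0 0)))) c
              ltac:(unfold c; lra)) as [d [Hd Hclose]].
  destruct (E0_stable_nearby_orbits Hst d Hd) as [rho [Hrho Htrap]].
  destruct (Htrap rho 0 ltac:(lra) ltac:(lra)) as [S [V [I1 [I2 [Hsol [HI10 [_ Hstay]]]]]]].
  destruct Hsol as [Hnn [_ [_ [HrcI1 [_ Hder]]]]].
  apply (exp_growth_not_bounded I1 (fun t => F1 (S t) (I1 t) - a1 * I1 t) c d);
    [unfold c; lra | lra | exact HrcI1 | intros t Ht; apply Hder, Ht | | intros t Ht; apply Hstay, Ht].
  intros t Ht. destruct (Hnn t ltac:(lra)) as [HS [_ [HI1 _]]].
  destruct (Hstay t ltac:(lra)) as [HSclose [_ [HI1small _]]].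
  specialize (Hclose (S t) (I1 t) HSclose ltac:(rewrite Rminus_0_r, Rabs_pos_eq; lra)).
  apply Rabs_lt_between in Hclose.
  rewrite (incidence_factorization F1 f1 HF1) by assumption.
  unfold c in *. nra.
Qed.

Lemma E0_unstable_of_I2_growth : a2 < f2 s0 0 + k * vs -> E0_unstable F1 F2 Lam mu r k gam1 gam2 v1 v2.
Proof.
  intros Hgrow Hst. destruct equilibrium_identities as [Hs0 [Hvs _]].
  set (c := (f2 s0 0 + k * vs - a2) / 4).
  destruct (continuous2_eps f2 s0 0 (proj1 (proj2 (proj2 (incidence_factor_C1 F2 f2 HF2 s0 0)))) c
              ltac:(unfold c; lra)) as [d' [Hd' Hclose]].
  set (d := Rmin d' (c / k)).
  assert (Hd : 0 < d) by (apply Rmin_glb_lt; [lra | apply Rdiv_lt_0_compat; unfold c; lra]).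
  assert (Hdk : k * d <= c).
  { replace c with (k * (c / k)) by (field; lra). apply Rmult_le_compat_l; [lra | apply Rmin_r]. }
  assert (Hdd' : d <= d') by apply Rmin_l.
  destruct (E0_stable_nearby_orbits Hst d Hd) as [rho [Hrho Htrap]].
  destruct (Htrap 0 rho ltac:(lra) ltac:(lra)) as [S [V [I1 [I2 [Hsol [_ [HI20 Hstay]]]]]]].
  destruct Hsol as [Hnn [_ [_ [_ [HrcI2 Hder]]]]].
  apply (exp_growth_not_bounded I2 (fun t => F2 (S t) (I2 t) + k * I2 t * V t - a2 * I2 t) c d);
    [unfold c; lra | lra | exact HrcI2 | intros t Ht; apply Hder, Ht | | intros t Ht; apply Hstay, Ht].
  intros t Ht. destruct (Hnn t ltac:(lra)) as [HS [_ [_ HI2]]].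
  destruct (Hstay t ltac:(lra)) as [HSclose [HVclose [_ HI2small]]].
  specialize (Hclose (S t) (I2 t) ltac:(lra) ltac:(rewrite Rminus_0_r, Rabs_pos_eq; lra)).
  apply Rabs_lt_between in Hclose. apply Rabs_lt_between in HVclose.
  assert (HkV : k * vs - c <= k * V t) by nra.
  rewrite (incidence_factorization F2 f2 HF2) by assumption.
  assert (Hrate : c <= f2 (S t) (I2 t) + k * V t - a2) by (unfold c in *; lra).
  nra.
Qed.

(** * Exponential decay when [R0 < 1] *)

Lemma decay_rate_and_radius : f1 s0 0 < a1 -> f2 s0 0 + k * vs < a2 ->
  exists c d0, 0 < c /\ c <= mu / 2 /\ 0 < d0 /\
    f1 (s0 + d0) 0 <= a1 - c /\ f2 (s0 + d0) 0 + k * (vs + 3 * d0) <= a2 - c.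
Proof.
  intros H1 H2.
  set (c := Rmin (Rmin ((a1 - f1 s0 0) / 2) ((a2 - f2 s0 0 - k * vs) / 2)) (mu / 2)).
  assert (Hc : 0 < c /\ c <= (a1 - f1 s0 0) / 2 /\ c <= (a2 - f2 s0 0 - k * vs) / 2 /\ c <= mu / 2).
  { unfold c. repeat split; [repeat apply Rmin_glb_lt; lra | | | apply Rmin_r];
      eapply Rle_trans; [apply Rmin_l | apply Rmin_l | apply Rmin_l | apply Rmin_r]. }
  destruct Hc as [Hc [Hc1 [Hc2 Hc3]]].
  destruct (continuous2_eps f1 s0 0 (proj1 (proj2 (proj2 (incidence_factor_C1 F1 f1 HF1 s0 0)))) c Hc)
    as [e1 [He1 Hf1]].
  destruct (continuous2_eps f2 s0 0 (proj1 (proj2 (proj2 (incidence_factor_C1 F2 f2 HF2 s0 0)))) (c / 2)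
              ltac:(lra)) as [e2 [He2 Hf2]].
  set (d0 := Rmin (Rmin (e1 / 2) (e2 / 2)) (c / (6 * k))).
  assert (Hd0 : 0 < d0 /\ d0 < e1 /\ d0 < e2 /\ 6 * k * d0 <= c).
  { unfold d0. split; [repeat apply Rmin_glb_lt; try lra; apply Rdiv_lt_0_compat; lra |].
    split; [| split].
    - eapply Rle_lt_trans; [apply Rmin_l |]. eapply Rle_lt_trans; [apply Rmin_l | lra].
    - eapply Rle_lt_trans; [apply Rmin_l |]. eapply Rle_lt_trans; [apply Rmin_r | lra].
    - replace c with (6 * k * (c / (6 * k))) at 2 by (field; lra).
      apply Rmult_le_compat_l; [lra | apply Rmin_r]. }
  destruct Hd0 as [Hd0 [Hd01 [Hd02 Hd0k]]].
  exists c, d0. repeat split; try lra.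
  - specialize (Hf1 (s0 + d0) 0 ltac:(rewrite Rabs_pos_eq; lra) ltac:(rewrite Rminus_diag, Rabs_R0; lra)).
    apply Rabs_lt_between in Hf1. lra.
  - specialize (Hf2 (s0 + d0) 0 ltac:(rewrite Rabs_pos_eq; lra) ltac:(rewrite Rminus_diag, Rabs_R0; lra)).
    apply Rabs_lt_between in Hf2. lra.
Qed.

Section Decay.

Variables (c d0 : R).
Hypotheses (Hc : 0 < c) (Hcmu : c <= mu / 2) (Hd0 : 0 < d0)
  (Hf1 : f1 (s0 + d0) 0 <= a1 - c) (Hf2 : f2 (s0 + d0) 0 + k * (vs + 3 * d0) <= a2 - c).

(* [fbound] bounds [f1 + f2] along the trajectories considered; [KS * D0] and [KV * D0] are the
   amplitudes of the [e^{-ct}] terms in the comparison functions for [S] and [V]. *)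
Let fbound := f1 (s0 + d0) 0 + f2 (s0 + d0) 0.
Let KS := fbound / (lm - c).
Let KV := (r * (1 + KS) + k * (vs + 3 * d0)) / (mu - c).

Lemma decay_coefficients_nonneg : 0 <= fbound /\ 0 <= KS /\ 0 <= KV.
Proof.
  destruct equilibrium_identities as [Hs0 [Hvs _]]. pose proof rates_gt_mu as [Hlm _].
  assert (0 <= fbound).
  { unfold fbound. pose proof (incidence_factor_nonneg F1 f1 HF1 (s0 + d0) 0 ltac:(lra) ltac:(lra)).
    pose proof (incidence_factor_nonneg F2 f2 HF2 (s0 + d0) 0 ltac:(lra) ltac:(lra)). lra. }
  assert (0 <= KS) by (apply Rdiv_le_0_compat; lra).
  split; [| split]; trivial. apply Rdiv_le_0_compat; [| lra].
  pose proof (Rmult_le_pos r (1 + KS) ltac:(lra) ltac:(lra)).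
  pose proof (Rmult_le_pos k (vs + 3 * d0) ltac:(lra) ltac:(lra)). lra.
Qed.

Section Trajectory.

Variables S V I1 I2 : R -> R.
Hypothesis Hsol : is_solution F1 F2 Lam mu r k gam1 gam2 v1 v2 S V I1 I2.
Let D0 := dist4 (S 0) (V 0) (I1 0) (I2 0) s0 vs 0 0.
Hypothesis Hinit : D0 < d0.

Lemma trajectory_initial : Rabs (S 0 - s0) <= D0 /\ Rabs (V 0 - vs) <= D0 /\ 0 <= I1 0 <= D0 /\ 0 <= I2 0 <= D0.
Proof.
  destruct (proj1 Hsol 0 (Rle_refl 0)) as [_ [_ [HI1 HI2]]].
  destruct (dist4_component_le (S 0) (V 0) (I1 0) (I2 0) s0 vs 0 0) as [H1 [H2 [H3 H4]]].
  rewrite Rminus_0_r, Rabs_pos_eq in H3, H4 by assumption. fold D0 in H1, H2, H3, H4. lra.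
Qed.

Lemma S_dev_upper t : 0 <= t -> S t - s0 <= (S 0 - s0) * exp (- lm * t).
Proof.
  intros Ht. destruct Hsol as [Hnn [HrcS [_ [_ [_ Hder]]]]].
  destruct equilibrium_identities as [_ [_ [HLam_s0 _]]].
  assert (H := exp_comparison_upper_shifted S (fun t => Lam - F1 (S t) (I1 t) - F2 (S t) (I2 t) - lm * S t)
                 s0 lm 0 0 HrcS (fun u Hu => proj1 (Hder u Hu))).
  enough (S t - s0 <= (S 0 - s0 + 0) * exp (- lm * t) - 0 * exp (- 0 * t)) by lra.
  apply H; [| exact Ht]. intros u Hu. destruct (Hnn u ltac:(lra)) as [HS [_ [HI1 HI2]]].
  pose proof (incidence_nonneg F1 f1 HF1 _ _ HS HI1). pose proof (incidence_nonneg F2 f2 HF2 _ _ HS HI2).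
  lra.
Qed.

Lemma S_bounded t : 0 <= t -> S t <= s0 + d0.
Proof.
  intros Ht. pose proof (S_dev_upper t Ht). destruct trajectory_initial as [HS0 _].
  pose proof (exp_pos (- lm * t)). pose proof rates_gt_mu as [Hlm _].
  pose proof (exp_decay_le_1 lm t ltac:(lra) Ht). apply Rabs_le_between in HS0.
  assert ((S 0 - s0) * exp (- lm * t) <= D0) by (destruct (Rle_dec 0 (S 0 - s0)); nra).
  lra.
Qed.

Lemma V_dev_upper t : 0 <= t ->
  V t - vs <= (V 0 - vs + (S 0 - s0)) * exp (- mu * t) - (S 0 - s0) * exp (- lm * t).
Proof.
  intros Ht. destruct Hsol as [Hnn [_ [HrcV [_ [_ Hder]]]]].
  destruct equilibrium_identities as [_ [_ [_ [Hmuvs _]]]].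
  apply (exp_comparison_upper_shifted V (fun t => r * S t - (mu + k * I2 t) * V t)
           vs mu lm (S 0 - s0) HrcV (fun u Hu => proj1 (proj2 (Hder u Hu)))); [| exact Ht].
  intros u Hu. destruct (Hnn u ltac:(lra)) as [_ [HV [_ HI2]]].
  pose proof (S_dev_upper u ltac:(lra)).
  assert (0 <= k * I2 u * V u) by (apply Rmult_le_pos; [apply Rmult_le_pos |]; lra).
  replace (mu - lm) with (- r) by (unfold lm, lam; ring). nra.
Qed.

Lemma V_bounded t : 0 <= t -> V t <= vs + 3 * d0.
Proof.
  intros Ht. pose proof (V_dev_upper t Ht). destruct trajectory_initial as [HS0 [HV0 _]].
  pose proof rates_gt_mu as [Hlm _].
  pose proof (exp_pos (- lm * t)). pose proof (exp_decay_le_1 lm t ltac:(lra) Ht).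
  pose proof (exp_pos (- mu * t)). pose proof (exp_decay_le_1 mu t ltac:(lra) Ht).
  apply Rabs_le_between in HS0. apply Rabs_le_between in HV0.
  assert (- (S 0 - s0) * exp (- lm * t) <= D0) by (destruct (Rle_dec 0 (S 0 - s0)); nra).
  assert ((V 0 - vs + (S 0 - s0)) * exp (- mu * t) <= 2 * D0)
    by (destruct (Rle_dec 0 (V 0 - vs + (S 0 - s0))); nra).
  lra.
Qed.

Lemma I1_decay t : 0 <= t -> I1 t <= I1 0 * exp (- c * t).
Proof.
  intros Ht. destruct Hsol as [Hnn [_ [_ [HrcI1 [_ Hder]]]]].
  enough (I1 t <= (I1 0 + 0) * exp (- c * t) - 0 * exp (- 0 * t)) by lra.
  apply (exp_comparison_upper I1 (fun t => F1 (S t) (I1 t) - a1 * I1 t)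
           c 0 0 HrcI1 (fun u Hu => proj1 (proj2 (proj2 (Hder u Hu))))); [| exact Ht].
  intros u Hu. destruct (Hnn u ltac:(lra)) as [HS [_ [HI1 _]]].
  rewrite (incidence_factorization F1 f1 HF1) by assumption.
  pose proof (incidence_factor_le_at_0 F1 f1 HF1 (S u) (s0 + d0) (I1 u) (conj HS (S_bounded u ltac:(lra))) HI1).
  nra.
Qed.

Lemma I2_decay t : 0 <= t -> I2 t <= I2 0 * exp (- c * t).
Proof.
  intros Ht. destruct Hsol as [Hnn [_ [_ [_ [HrcI2 Hder]]]]].
  enough (I2 t <= (I2 0 + 0) * exp (- c * t) - 0 * exp (- 0 * t)) by lra.
  apply (exp_comparison_upper I2 (fun t => F2 (S t) (I2 t) + k * I2 t * V t - a2 * I2 t)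
           c 0 0 HrcI2 (fun u Hu => proj2 (proj2 (proj2 (Hder u Hu))))); [| exact Ht].
  intros u Hu. destruct (Hnn u ltac:(lra)) as [HS [HV [_ HI2]]].
  rewrite (incidence_factorization F2 f2 HF2) by assumption.
  pose proof (incidence_factor_le_at_0 F2 f2 HF2 (S u) (s0 + d0) (I2 u) (conj HS (S_bounded u ltac:(lra))) HI2).
  pose proof (V_bounded u ltac:(lra)).
  assert (Hrate : f2 (S u) (I2 u) + k * V u - a2 + c <= 0) by nra.
  nra.
Qed.

Lemma incidence_sum_decay u : 0 <= u ->
  F1 (S u) (I1 u) + F2 (S u) (I2 u) <= fbound * D0 * exp (- c * u).
Proof.
  intros Hu. destruct (proj1 Hsol u Hu) as [HS [_ [HI1 HI2]]].
  destruct trajectory_initial as [_ [_ [HI10 HI20]]].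
  pose proof (exp_pos (- c * u)).
  assert (Hbound : forall (F f : R -> R -> R) (I : R -> R), incidence_hyp F f -> 0 <= I u ->
            0 <= I 0 <= D0 -> I u <= I 0 * exp (- c * u) ->
            F (S u) (I u) <= D0 * exp (- c * u) * f (s0 + d0) 0).
  { intros F f I HFf HI HI0 Hdecay.
    rewrite (incidence_factorization F f HFf) by assumption.
    pose proof (incidence_factor_le_at_0 F f HFf (S u) (s0 + d0) (I u) (conj HS (S_bounded u Hu)) HI).
    pose proof (incidence_factor_nonneg F f HFf (S u) (I u) HS HI).
    assert (I u <= D0 * exp (- c * u)) by nra.
    apply Rle_trans with (I u * f (s0 + d0) 0); [apply Rmult_le_compat_l; lra |].
    apply Rmult_le_compat_r; [lra | assumption]. }
  pose proof (Hbound F1 f1 I1 HF1 HI1 HI10 (I1_decay u Hu)).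
  pose proof (Hbound F2 f2 I2 HF2 HI2 HI20 (I2_decay u Hu)).
  unfold fbound. lra.
Qed.

Lemma S_dev_lower t : 0 <= t ->
  (S 0 - s0 + KS * D0) * exp (- lm * t) - KS * D0 * exp (- c * t) <= S t - s0.
Proof.
  intros Ht. destruct Hsol as [_ [HrcS [_ [_ [_ Hder]]]]].
  destruct equilibrium_identities as [_ [_ [HLam_s0 _]]]. pose proof rates_gt_mu as [Hlm _].
  apply (exp_comparison_lower_shifted S (fun t => Lam - F1 (S t) (I1 t) - F2 (S t) (I2 t) - lm * S t)
           s0 lm c (KS * D0) HrcS (fun u Hu => proj1 (Hder u Hu))); [| exact Ht].
  intros u Hu. pose proof (incidence_sum_decay u ltac:(lra)).
  replace (KS * D0 * (lm - c)) with (fbound * D0) by (unfold KS; field; lra).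
  lra.
Qed.

Lemma S_dev_lower_exp u : 0 <= u -> - ((1 + KS) * D0 * exp (- c * u)) <= S u - s0.
Proof.
  intros Hu. pose proof (S_dev_lower u Hu). destruct trajectory_initial as [HS0 [_ [[HI10 HD0] _]]].
  destruct decay_coefficients_nonneg as [_ [HKS _]]. pose proof rates_gt_mu as [Hlm _].
  pose proof (exp_pos (- lm * u)). pose proof (exp_decay_antitone c lm u ltac:(lra) Hu).
  apply Rabs_le_between in HS0.
  assert (- (D0 * exp (- c * u)) <= (S 0 - s0) * exp (- lm * u)) by nra.
  assert (0 <= KS * D0 * exp (- lm * u)) by (apply Rmult_le_pos; [apply Rmult_le_pos |]; lra).
  lra.
Qed.

Lemma V_dev_lower t : 0 <= t ->
  (V 0 - vs + KV * D0) * exp (- mu * t) - KV * D0 * exp (- c * t) <= V t - vs.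
Proof.
  intros Ht. destruct Hsol as [Hnn [_ [HrcV [_ [_ Hder]]]]].
  destruct equilibrium_identities as [_ [_ [_ [Hmuvs _]]]].
  destruct trajectory_initial as [_ [_ [_ [HI20 HD0]]]].
  apply (exp_comparison_lower_shifted V (fun t => r * S t - (mu + k * I2 t) * V t)
           vs mu c (KV * D0) HrcV (fun u Hu => proj1 (proj2 (Hder u Hu)))); [| exact Ht].
  intros u Hu. destruct (Hnn u ltac:(lra)) as [_ [HV [_ HI2]]].
  pose proof (S_dev_lower_exp u ltac:(lra)). pose proof (exp_pos (- c * u)).
  assert (HI2V : I2 u * V u <= D0 * exp (- c * u) * (vs + 3 * d0)).
  { pose proof (I2_decay u ltac:(lra)). pose proof (V_bounded u ltac:(lra)).
    apply Rle_trans with (I2 u * (vs + 3 * d0)); [apply Rmult_le_compat_l; lra |].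
    apply Rmult_le_compat_r; [destruct equilibrium_identities as [_ [Hvs _]]; lra | nra]. }
  replace (KV * D0 * (mu - c)) with ((r * (1 + KS) + k * (vs + 3 * d0)) * D0)
    by (unfold KV; field; lra).
  nra.
Qed.

Lemma trajectory_exponential_decay t : 0 <= t ->
  dist4 (S t) (V t) (I1 t) (I2 t) s0 vs 0 0 <= (6 + KS + KV) * D0 * exp (- c * t).
Proof.
  intros Ht. destruct trajectory_initial as [HS0 [HV0 [[HI10 HD0] HI20]]].
  destruct (proj1 Hsol t Ht) as [_ [_ [HI1 HI2]]]. pose proof rates_gt_mu as [Hlm _].
  pose proof (exp_pos (- c * t)) as HE.
  pose proof (exp_pos (- lm * t)). pose proof (exp_decay_antitone c lm t ltac:(lra) Ht).
  pose proof (exp_pos (- mu * t)). pose proof (exp_decay_antitone c mu t ltac:(lra) Ht).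
  assert (HS : Rabs (S t - s0) <= (1 + KS) * D0 * exp (- c * t)).
  { pose proof (S_dev_upper t Ht). pose proof (S_dev_lower_exp t Ht).
    pose proof (Rmult_abs_le_between (S 0 - s0) D0 (exp (- lm * t)) (exp (- c * t)) HS0 ltac:(lra)).
    destruct decay_coefficients_nonneg as [_ [HKS _]].
    assert (0 <= KS * D0 * exp (- c * t)) by (apply Rmult_le_pos; [apply Rmult_le_pos |]; lra).
    apply Rabs_le_between. lra. }
  assert (HV : Rabs (V t - vs) <= (3 + KV) * D0 * exp (- c * t)).
  { pose proof (V_dev_upper t Ht). pose proof (V_dev_lower t Ht).
    pose proof (Rmult_abs_le_between (S 0 - s0) D0 (exp (- lm * t)) (exp (- c * t)) HS0 ltac:(lra)).
    pose proof (Rmult_abs_le_between (V 0 - vs) D0 (exp (- mu * t)) (exp (- c * t)) HV0 ltac:(lra)).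
    assert (Hsum : Rabs (V 0 - vs + (S 0 - s0)) <= 2 * D0)
      by (eapply Rle_trans; [apply Rabs_triang | lra]).
    pose proof (Rmult_abs_le_between _ _ (exp (- mu * t)) (exp (- c * t)) Hsum ltac:(lra)).
    destruct decay_coefficients_nonneg as [_ [_ HKV]].
    assert (0 <= KV * D0 * exp (- mu * t)) by (apply Rmult_le_pos; [apply Rmult_le_pos |]; lra).
    assert (0 <= KV * D0 * exp (- c * t)) by (apply Rmult_le_pos; [apply Rmult_le_pos |]; lra).
    assert (0 <= D0 * exp (- c * t)) by (apply Rmult_le_pos; lra).
    apply Rabs_le_between. lra. }
  assert (HI1t : Rabs (I1 t - 0) <= D0 * exp (- c * t)).
  { rewrite Rminus_0_r, Rabs_pos_eq by exact HI1. pose proof (I1_decay t Ht). nra. }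
  assert (HI2t : Rabs (I2 t - 0) <= D0 * exp (- c * t)).
  { rewrite Rminus_0_r, Rabs_pos_eq by exact HI2. pose proof (I2_decay t Ht). nra. }
  eapply Rle_trans; [apply dist4_le_sum | lra].
Qed.

End Trajectory.

Lemma solutions_decay_uniformly : exists M, 0 <= M /\
  forall S V I1 I2, is_solution F1 F2 Lam mu r k gam1 gam2 v1 v2 S V I1 I2 ->
    dist4 (S 0) (V 0) (I1 0) (I2 0) s0 vs 0 0 < d0 ->
    forall t, 0 <= t -> dist4 (S t) (V t) (I1 t) (I2 t) s0 vs 0 0 <=
      M * dist4 (S 0) (V 0) (I1 0) (I2 0) s0 vs 0 0 * exp (- c * t).
Proof.
  exists (6 + KS + KV). split; [destruct decay_coefficients_nonneg as [_ [HKS HKV]]; lra |].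
  intros S V I1 I2 Hsol Hinit t Ht. apply trajectory_exponential_decay; assumption.
Qed.

End Decay.

Lemma E0_LAS_of_decay : f1 s0 0 < a1 -> f2 s0 0 + k * vs < a2 -> E0_LAS F1 F2 Lam mu r k gam1 gam2 v1 v2.
Proof.
  intros H1 H2. destruct (decay_rate_and_radius H1 H2) as [c [d0 [Hc [Hcmu [Hd0 [Hf1 Hf2]]]]]].
  destruct (solutions_decay_uniformly c d0 Hc Hcmu Hd0 Hf1 Hf2) as [M [HM Hdecay]].
  split.
  - intros eps Heps. exists (Rmin d0 (eps / (M + 1))).
    split; [apply Rmin_glb_lt; [lra | apply Rdiv_lt_0_compat; lra] |].
    intros S V I1 I2 Hsol Hinit t Ht. fold s0 vs in Hinit |- *.
    set (D0 := dist4 (S 0) (V 0) (I1 0) (I2 0) s0 vs 0 0) in *.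
    assert (HD0 : 0 <= D0) by apply sqrt_pos.
    assert (HD0eps : D0 * (M + 1) < eps).
    { apply (Rmult_lt_compat_r (M + 1)) in Hinit; [| lra].
      eapply Rlt_le_trans; [exact Hinit |]. rewrite Rmult_comm.
      replace eps with ((M + 1) * (eps / (M + 1))) at 2 by (field; lra).
      apply Rmult_le_compat_l; [lra | apply Rmin_r]. }
    specialize (Hdecay S V I1 I2 Hsol (Rlt_le_trans _ _ _ Hinit (Rmin_l _ _)) t Ht). fold D0 in Hdecay.
    pose proof (exp_decay_le_1 c t ltac:(lra) Ht). pose proof (exp_pos (- c * t)).
    assert (M * D0 * exp (- c * t) <= M * D0)
      by (rewrite <- (Rmult_1_r (M * D0)) at 2; apply Rmult_le_compat_l; [nra | lra]).
    lra.
  - exists d0. split; [exact Hd0 |]. intros S V I1 I2 Hsol Hinit. fold s0 vs in Hinit |- *.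
    set (D0 := dist4 (S 0) (V 0) (I1 0) (I2 0) s0 vs 0 0) in *.
    apply (filterlim_locally (F := Rbar_locally p_infty)). intros eps.
    destruct (exp_decay_eventually_lt (M * D0) c eps Hc (cond_pos eps)) as [T HT].
    exists (Rmax T 0). intros t Ht. pose proof (Rmax_l T 0). pose proof (Rmax_r T 0).
    specialize (Hdecay S V I1 I2 Hsol Hinit t ltac:(lra)). fold D0 in Hdecay.
    specialize (HT t ltac:(lra)).
    change (Rabs (dist4 (S t) (V t) (I1 t) (I2 t) s0 vs 0 0 - 0) < eps).
    rewrite Rminus_0_r, Rabs_pos_eq by apply sqrt_pos. lra.
Qed.

Lemma calR1_eq : calR1 F1 Lam mu r gam1 v1 = f1 s0 0 / a1.
Proof.
  destruct equilibrium_identities as [Hs0 _].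
  unfold calR1, Defs.sigma.
  rewrite (incidence_dI_at_0 F1 f1 HF1) by (change (S0 Lam r mu) with s0; lra). reflexivity.
Qed.

Lemma calR2_eq : calR2 F2 Lam mu r k gam2 v2 = (f2 s0 0 + k * vs) / a2.
Proof.
  destruct equilibrium_identities as [Hs0 _]. pose proof rates_gt_mu as [Hlm [_ Ha2]].
  unfold calR2, Defs.sigma. rewrite (incidence_dI_at_0 F2 f2 HF2) by (change (S0 Lam r mu) with s0; lra).
  change (S0 Lam r mu) with s0. fold a2 lm. unfold vs, E0_V. fold lm. field. repeat split; lra.
Qed.

Lemma E0_unstable_of_calR0_gt_1 :
  calR0 F1 F2 Lam mu r k gam1 gam2 v1 v2 > 1 -> E0_unstable F1 F2 Lam mu r k gam1 gam2 v1 v2.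
Proof.
  pose proof rates_gt_mu as [_ [Ha1 Ha2]].
  unfold calR0. rewrite calR1_eq, calR2_eq. intros HR.
  destruct (Rle_dec (f1 s0 0 / a1) ((f2 s0 0 + k * vs) / a2)) as [Hle | Hgt].
  - rewrite Rmax_right in HR by exact Hle. apply E0_unstable_of_I2_growth.
    apply (Rmult_lt_compat_r a2) in HR; [| lra]. unfold Rdiv in HR.
    rewrite Rmult_assoc, Rinv_l in HR; lra.
  - rewrite Rmax_left in HR by lra. apply E0_unstable_of_I1_growth.
    apply (Rmult_lt_compat_r a1) in HR; [| lra]. unfold Rdiv in HR.
    rewrite Rmult_assoc, Rinv_l in HR; lra.
Qed.

Lemma E0_LAS_of_calR0_lt_1 :
  calR0 F1 F2 Lam mu r k gam1 gam2 v1 v2 < 1 -> E0_LAS F1 F2 Lam mu r k gam1 gam2 v1 v2.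
Proof.
  pose proof rates_gt_mu as [_ [Ha1 Ha2]].
  unfold calR0. rewrite calR1_eq, calR2_eq. intros HR.
  pose proof (Rle_lt_trans _ _ _ (Rmax_l _ _) HR) as H1. pose proof (Rle_lt_trans _ _ _ (Rmax_r _ _) HR) as H2.
  apply (Rmult_lt_compat_r a1) in H1; [| lra]. apply (Rmult_lt_compat_r a2) in H2; [| lra].
  unfold Rdiv in H1, H2. rewrite Rmult_assoc, Rinv_l in H1, H2 by lra.
  apply E0_LAS_of_decay; lra.
Qed.

End Model.

Theorem mainTheorem6
  (Lam mu r k gam1 gam2 v1 v2 : R) (F1 f1 F2 f2 : R -> R -> R)
  (HLam : 0 < Lam) (Hmu : 0 < mu) (Hr : 0 < r) (Hk : 0 < k)
  (Hgam1 : 0 < gam1) (Hgam2 : 0 < gam2) (Hv1 : 0 <= v1) (Hv2 : 0 <= v2)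
  (HF1 : incidence_hyp F1 f1) (HF2 : incidence_hyp F2 f2) :
  (calR0 F1 F2 Lam mu r k gam1 gam2 v1 v2 > 1 ->
     E0_unstable F1 F2 Lam mu r k gam1 gam2 v1 v2) /\
  (calR0 F1 F2 Lam mu r k gam1 gam2 v1 v2 < 1 ->
     E0_LAS F1 F2 Lam mu r k gam1 gam2 v1 v2).
Proof.
  split.
  - exact (E0_unstable_of_calR0_gt_1 Lam mu r k gam1 gam2 v1 v2 F1 f1 F2 f2
             HLam Hmu Hr Hk Hgam1 Hgam2 Hv1 Hv2 HF1 HF2).
  - exact (E0_LAS_of_calR0_lt_1 Lam mu r k gam1 gam2 v1 v2 F1 f1 F2 f2
             HLam Hmu Hr Hk Hgam1 Hgam2 Hv1 Hv2 HF1 HF2).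
Qed.
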